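(* Let $p$ be an offspring distribution whose generating function satisfies $f(z)=z+(1-z)^{\beta-1}l_1(1-z)$ for $z\in[0,1]$, where $\beta\in(2,3]$ and $l_1$ is slowly varying at $0^+$, and let $\nu$ be the law of the associated infinite tree with spine (described in the context). Then for every $i\ge1$: (a) there is a function $l_2$ slowly varying at $0^+$ such that $\langle z^{|\mathcal A^i|}\rangle_\nu=1-(1-z)^{\frac{\beta-2}{\beta-1}}\,l_2(1-z)$ for $z\in(0,1)$; (b) $\nu(X^i_n>0)=\dfrac{\beta-1}{\beta-2}\,\dfrac1n\,(1+o(1))$ as $n\to\infty$.
   Context: $\nu$ is the law of the random infinite planar tree: root $r$ of degree one joined to $s_1$; independently for each $i\ge1$, spine vertex $s_i$ has $k-1$ children with probability $(k-1)p(k-1)$, $k\ge2$; one uniformly chosen child is $s_{i+1}$ and each of the other $k-2$ children roots an independent Galton–Watson tree with offspring distribution $p$. $\mathcal A^i$ is $s_i$ together with all these finite Galton–Watson subtrees hanging from $s_i$ (the component of $s_i$ after deleting the spine edges at $s_i$); $|\mathcal A^i|$ is its number of edges and $X^i_n$ is the number of its vertices at distance $n$ from $s_i$. $\langle\cdot\rangle_\nu$ is expectation. A function $l$ is slowly varying at $0^+$ if $l(\lambda x)/l(x)\to1$ as $x\to0^+$ for every $\lambda>0$. *)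

From Stdlib Require Import Reals List ClassicalEpsilon.
Import ListNotations.
Open Scope R_scope.

Inductive tree : Type := Node : list tree -> tree.

Fixpoint gw_weight (p : nat -> R) (t : tree) : R :=
  match t with
  | Node ts =>
      p (length ts) *
      (fix prodw (l : list tree) : R :=
         match l with nil => 1 | t' :: l' => gw_weight p t' * prodw l' end) ts
  end.

Definition forest_weight (p : nat -> R) (ts : list tree) : R :=
  fold_right Rmult 1 (map (gw_weight p) ts).

Fixpoint tree_edges (t : tree) : nat :=
  match t with
  | Node ts =>
      (fix s (l : list tree) : nat :=
         match l with nil => 0%nat | t' :: l' => (S (tree_edges t') + s l')%nat end) ts
  end.

Fixpoint tree_level (n : nat) (t : tree) : nat :=
  match t with
  | Node ts =>
      match n with
      | O => 1%nat
      | S m =>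
          (fix s (l : list tree) : nat :=
             match l with nil => 0%nat | t' :: l' => (tree_level m t' + s l')%nat end) ts
      end
  end.

(** Unordered sum of a nonnegative family over a (countable) type:
    the least upper bound of all finite partial sums (over duplicate-free lists). *)
Definition nnsum {T : Type} (w : T -> R) : R :=
  epsilon (inhabits 0)
    (fun s => is_lub (fun r => exists L : list T, NoDup L /\
                       r = fold_right Rplus 0 (map w L)) s).

(** Configuration of the component A^i at spine vertex s_i:
    (j, ts) where s_i has k-1 = length ts + 1 children, the spine child s_{i+1}
    is at position j (0 <= j < k-1), and ts is the ordered list of the k-2
    finite Galton-Watson subtrees hanging from the other children.
    A^i itself is the planar tree Node ts rooted at s_i. *)
Definition conf : Type := (nat * list tree)%type.

Definition conf_tree (c : conf) : tree := Node (snd c).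

(** Law of A^i under nu (the same for every i >= 1, since the spine steps
    are i.i.d.; the index i is kept only to mirror the statement):
    P(k-1 children) = (k-1) p(k-1), uniform spine position 1/(k-1),
    independent GW subtrees. *)
Definition A_law (p : nat -> R) (i : nat) (c : conf) : R :=
  let (j, ts) := c in
  let k := (length ts + 2)%nat in
  if Nat.ltb j (k - 1) then
    (INR (k - 1) * p (k - 1)%nat) * / INR (k - 1) * forest_weight p ts
  else 0.

Definition A_size_gf (p : nat -> R) (i : nat) (z : R) : R :=
  nnsum (fun c => A_law p i c * z ^ tree_edges (conf_tree c)).

Definition A_survival (p : nat -> R) (i n : nat) : R :=
  nnsum (fun c => A_law p i c *
                  (if Nat.ltb 0 (tree_level n (conf_tree c)) then 1 else 0)).

(** x^y for x >= 0, with the convention 0^y = 0 (used only for y > 0). *)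
Definition rpow (x y : R) : R := if Rle_dec x 0 then 0 else Rpower x y.

Definition slowly_varying_0 (l : R -> R) : Prop :=
  forall lam : R, 0 < lam ->
  forall eps : R, 0 < eps -> exists delta : R, 0 < delta /\
    forall x : R, 0 < x < delta -> Rabs (l (lam * x) / l x - 1) < eps.

Definition offspring_distribution (p : nat -> R) : Prop :=
  (forall k, 0 <= p k) /\ infinite_sum p 1.

(** Write F for the offspring generating function, with
    F(1 - x) = 1 - x + h(x) and h(x) = x^(beta-1) l1(x), and let a = beta - 2.

    The unordered sums [nnsum] over configurations of
    A^i are computed by exhausting the configurations with the finite lists
    of planar trees of bounded degree and height.  The Galton-Watson weights
    obey the fixed-point equation of F, which yields
      (a) <z^|A^i|> = F'(X), where X = z F(X) is the weighted total progeny;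
      (b) nu(X^i_(n+1) > 0) = F'(1) - F'(Z_n), where Z_n = P(extinct by
          generation n) satisfies Z_0 = 0 and Z_(n+1) = F(Z_n).

    With d(x) = 1 - F'(1 - x), convexity of F gives
    (y - x) d(x) <= h(y) - h(x) <= (y - x) d(y); since g(x) = h(x)/x is
    regularly varying of index a, this forces d(x) ~ (a + 1) g(x).
      (a) With y = 1 - z, the point x = 1 - X solves psi(x) = y, where
          psi(x) = h(x) / (1 - x + h(x)) is regularly varying of index a + 1;
          hence x is regularly varying of index 1/(a+1) in y and
          1 - <z^|A^i|> = d(x) is regularly varying of index a/(a+1).
      (b) q_n = 1 - Z_n satisfies q_(n+1) = q_n - h(q_n); the increments
          1/g(q_(n+1)) - 1/g(q_n) tend to a, so n g(q_n) -> 1/a by Cesaro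
          and nu(X^i_(n+1) > 0) = d(q_n) ~ (a+1)/(a n). *)

From Stdlib Require Import Reals List Lra Lia FinFun ClassicalEpsilon Classical.
Import ListNotations.
Open Scope R_scope.

Fixpoint lsum {T : Type} (w : T -> R) (l : list T) : R :=
  match l with [] => 0 | x :: l' => w x + lsum w l' end.

Fixpoint lprod {T : Type} (u : T -> R) (l : list T) : R :=
  match l with [] => 1 | x :: l' => u x * lprod u l' end.

Lemma lsum_fold {T} (w : T -> R) l : fold_right Rplus 0 (map w l) = lsum w l.
Proof. induction l; simpl; congruence. Qed.

Lemma lsum_app {T} (w : T -> R) l m : lsum w (l ++ m) = lsum w l + lsum w m.
Proof. induction l; simpl; lra. Qed.

Lemma lsum_nonneg {T} (w : T -> R) l : (forall x, 0 <= w x) -> 0 <= lsum w l.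
Proof. intros H; induction l; simpl; [lra|]. specialize (H a); lra. Qed.

Lemma lsum_ext {T} (w v : T -> R) l :
  (forall x, In x l -> w x = v x) -> lsum w l = lsum v l.
Proof. induction l; simpl; intros H; auto. rewrite H, IHl; auto. Qed.

Lemma lsum_le {T} (w v : T -> R) l :
  (forall x, In x l -> w x <= v x) -> lsum w l <= lsum v l.
Proof.
  induction l; simpl; intros H; [lra|].
  assert (w a <= v a) by auto. assert (lsum w l <= lsum v l) by auto. lra.
Qed.

Lemma lsum_scal {T} (w : T -> R) c l : lsum (fun x => c * w x) l = c * lsum w l.
Proof. induction l; simpl; [ring|]. rewrite IHl; ring. Qed.

Lemma lsum_minus {T} (w v : T -> R) l :
  lsum (fun x => w x - v x) l = lsum w l - lsum v l.
Proof. induction l; simpl; [ring|]. rewrite IHl; ring. Qed.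

Lemma lsum_const {T} (c : R) (l : list T) : lsum (fun _ => c) l = INR (length l) * c.
Proof. induction l; simpl length; [simpl; ring|]. rewrite S_INR. simpl. rewrite IHl; ring. Qed.

Lemma lsum_map {T U} (w : U -> R) (f : T -> U) l :
  lsum w (map f l) = lsum (fun x => w (f x)) l.
Proof. induction l; simpl; congruence. Qed.

Lemma lsum_flat_map {T U} (w : U -> R) (f : T -> list U) l :
  lsum w (flat_map f l) = lsum (fun x => lsum w (f x)) l.
Proof. induction l; simpl; auto. rewrite lsum_app; congruence. Qed.

Lemma lprod_nonneg {T} (u : T -> R) l : (forall x, In x l -> 0 <= u x) -> 0 <= lprod u l.
Proof. induction l; simpl; intros H; [lra|]. apply Rmult_le_pos; auto. Qed.

Lemma lprod_mult {T} (u v : T -> R) l : lprod u l * lprod v l = lprod (fun x => u x * v x) l.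
Proof. induction l; simpl; [ring|]. rewrite <- IHl; ring. Qed.

Lemma lprod_ext {T} (u v : T -> R) l : (forall x, u x = v x) -> lprod u l = lprod v l.
Proof. intros H; induction l; simpl; auto. rewrite H, IHl; auto. Qed.

Lemma lsum_le_incl {T} (w : T -> R) (L M : list T) :
  (forall x, 0 <= w x) -> NoDup L -> NoDup M ->
  (forall x, In x L -> w x <> 0 -> In x M) -> lsum w L <= lsum w M.
Proof.
  intros Hw HL. revert M. induction HL as [|a L Ha HL IH]; intros M HM Hinc; simpl.
  - apply lsum_nonneg; auto.
  - destruct (Req_dec (w a) 0) as [E|E].
    + rewrite E. assert (lsum w L <= lsum w M); [|lra].
      apply IH; auto. intros x Hx; apply Hinc; simpl; auto.
    + assert (Hin : In a M) by (apply Hinc; simpl; auto).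
      destruct (in_split _ _ Hin) as [M1 [M2 ->]].
      rewrite lsum_app; simpl.
      assert (lsum w L <= lsum w (M1 ++ M2)); [|rewrite lsum_app in H; lra].
      apply IH.
      * apply NoDup_remove_1 with a; auto.
      * intros x Hx Hx0. assert (In x (M1 ++ a :: M2)) by (apply Hinc; simpl; auto).
        apply in_app_or in H. apply in_or_app. destruct H as [H|[H|H]]; auto.
        subst; contradiction.
Qed.

Lemma nnsum_is_lub {T} (w : T -> R) B :
  (forall L, NoDup L -> lsum w L <= B) ->
  is_lub (fun r => exists L : list T, NoDup L /\ r = fold_right Rplus 0 (map w L)) (nnsum w).
Proof.
  intros HB. unfold nnsum. apply epsilon_spec.
  destruct (completeness (fun r => exists L : list T, NoDup L /\
                                     r = fold_right Rplus 0 (map w L))) as [m Hm].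
  - exists B. intros r [L [HL ->]]. rewrite lsum_fold; auto.
  - exists 0. exists []. split; [constructor|reflexivity].
  - exists m; exact Hm.
Qed.

Lemma nnsum_by_exhaustion {T} (w : T -> R) (E : nat -> nat -> list T) (X : R) :
  (forall x, 0 <= w x) -> (forall k h, NoDup (E k h)) ->
  (forall L, NoDup L -> exists k h, forall x, In x L -> w x <> 0 -> In x (E k h)) ->
  (forall k h, lsum w (E k h) <= X) ->
  (forall eps, 0 < eps -> exists k h, X - eps < lsum w (E k h)) ->
  nnsum w = X.
Proof.
  intros Hw HE Hcov Hub Happ.
  assert (HB : forall L, NoDup L -> lsum w L <= X).
  { intros L HL. destruct (Hcov L HL) as [k [h Hk]].
    apply Rle_trans with (lsum w (E k h)); [apply lsum_le_incl; auto|apply Hub]. }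
  destruct (nnsum_is_lub w X HB) as [H1 H2].
  apply Rle_antisym.
  - apply H2. intros r [L [HL ->]]. rewrite lsum_fold; auto.
  - destruct (Rle_lt_dec X (nnsum w)) as [|Hlt]; auto.
    destruct (Happ (X - nnsum w)) as [k [h Hkh]]; [lra|].
    assert (lsum w (E k h) <= nnsum w).
    { apply H1. exists (E k h). split; auto. rewrite lsum_fold; auto. }
    lra.
Qed.

(** ** Finite enumeration of planar trees of bounded degree and height *)

Lemma NoDup_flat_map {T U} (f : T -> list U) L :
  NoDup L -> (forall x, In x L -> NoDup (f x)) ->
  (forall x y z, In x L -> In y L -> In z (f x) -> In z (f y) -> x = y) ->
  NoDup (flat_map f L).
Proof.
  intros HL; induction HL as [|a L Ha HL IH]; intros Hf Hd; simpl; [constructor|].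
  apply NoDup_app.
  - apply Hf; simpl; auto.
  - apply IH; [intros; apply Hf; simpl; auto|]. intros; eapply Hd; simpl; eauto.
  - intros z Hz Hz'. apply in_flat_map in Hz'. destruct Hz' as [y [Hy Hzy]].
    assert (a = y) by (eapply Hd; simpl; eauto). subst; contradiction.
Qed.

Fixpoint lists_of_len {T : Type} (j : nat) (L : list T) : list (list T) :=
  match j with O => [[]] | S j' => flat_map (fun t => map (cons t) (lists_of_len j' L)) L end.

Lemma in_lists_of_len {T} j L (l : list T) :
  In l (lists_of_len j L) <-> length l = j /\ (forall x, In x l -> In x L).
Proof.
  revert l; induction j; intros l; simpl.
  - split.
    + intros [<-|[]]; simpl; split; auto; intros x [].
    + intros [H _]; destruct l; simpl in *; [auto|discriminate].
  - rewrite in_flat_map. split.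
    + intros [t [Ht Hl]]. apply in_map_iff in Hl. destruct Hl as [l' [<- Hl']].
      apply IHj in Hl'. destruct Hl' as [H1 H2]. simpl; split; [congruence|].
      intros x [<-|Hx]; auto.
    + intros [H1 H2]. destruct l as [|t l']; simpl in H1; [discriminate|].
      exists t; split; [apply H2; simpl; auto|]. apply in_map. apply IHj. split; [lia|].
      intros x Hx; apply H2; simpl; auto.
Qed.

Lemma NoDup_lists_of_len {T} j (L : list T) : NoDup L -> NoDup (lists_of_len j L).
Proof.
  intros HL; induction j; simpl.
  - constructor; [intros []|constructor].
  - apply NoDup_flat_map; auto.
    + intros x _. apply Injective_map_NoDup; auto. intros a b H; injection H; auto.
    + intros x y z _ _ Hx Hy. apply in_map_iff in Hx, Hy.
      destruct Hx as [l1 [<- _]]; destruct Hy as [l2 [E _]]. injection E; auto.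
Qed.

Lemma lsum_lprod_lists {T} j (L : list T) u :
  lsum (lprod u) (lists_of_len j L) = (lsum u L) ^ j.
Proof.
  induction j; simpl; [ring|].
  rewrite lsum_flat_map. rewrite <- IHj.
  rewrite (lsum_ext _ (fun x => lsum (lprod u) (lists_of_len j L) * u x)).
  - rewrite lsum_scal. ring.
  - intros x _. rewrite lsum_map. simpl. rewrite lsum_scal. ring.
Qed.

Definition lists_upto {T} (k : nat) (L : list T) : list (list T) :=
  flat_map (fun j => lists_of_len j L) (seq 0 (S k)).

Lemma in_lists_upto {T} k L (l : list T) :
  In l (lists_upto k L) <-> (length l <= k)%nat /\ (forall x, In x l -> In x L).
Proof.
  unfold lists_upto. rewrite in_flat_map. split.
  - intros [j [Hj Hl]]. apply in_seq in Hj. apply in_lists_of_len in Hl.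
    destruct Hl; split; auto; lia.
  - intros [H1 H2]. exists (length l). split; [apply in_seq; lia|]. apply in_lists_of_len; auto.
Qed.

Lemma NoDup_lists_upto {T} k (L : list T) : NoDup L -> NoDup (lists_upto k L).
Proof.
  intros HL. apply NoDup_flat_map; [apply seq_NoDup| |].
  - intros; apply NoDup_lists_of_len; auto.
  - intros x y z _ _ Hx Hy. apply in_lists_of_len in Hx, Hy. destruct Hx, Hy; congruence.
Qed.

Lemma lsum_lists_upto {T} (G : nat -> R) u k (L : list T) :
  lsum (fun l => G (length l) * lprod u l) (lists_upto k L)
  = lsum (fun j => G j * (lsum u L)^j) (seq 0 (S k)).
Proof.
  unfold lists_upto. rewrite lsum_flat_map. apply lsum_ext. intros j _.
  rewrite <- lsum_lprod_lists, <- lsum_scal. apply lsum_ext.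
  intros l Hl. apply in_lists_of_len in Hl. destruct Hl as [-> _]; auto.
Qed.

Fixpoint trees (k h : nat) : list tree :=
  match h with O => [Node []] | S h' => map Node (lists_upto k (trees k h')) end.

Fixpoint bounded (k h : nat) (t : tree) : Prop :=
  match h with
  | O => t = Node []
  | S h' => match t with Node ts => (length ts <= k)%nat /\ Forall (bounded k h') ts end
  end.

Lemma in_trees k h t : In t (trees k h) <-> bounded k h t.
Proof.
  revert t; induction h; intros t.
  - simpl. split; [intros [<-|[]]; auto| intros ->; auto].
  - change (In t (map Node (lists_upto k (trees k h))) <->
            match t with Node ts => (length ts <= k)%nat /\ Forall (bounded k h) ts end).
    rewrite in_map_iff. split.
    + intros [ts [<- Hts]]. apply in_lists_upto in Hts. destruct Hts as [H1 H2].
      split; auto. apply Forall_forall. intros x Hx; apply IHh; auto.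
    + destruct t as [ts]. intros [H1 H2]. exists ts; split; auto.
      apply in_lists_upto; split; auto. intros x Hx. apply IHh.
      rewrite Forall_forall in H2; auto.
Qed.

Lemma bounded_mono k h k' h' t :
  (k <= k')%nat -> (h <= h')%nat -> bounded k h t -> bounded k' h' t.
Proof.
  revert h' t; induction h; intros h' t Hk Hh; simpl.
  - intros ->. destruct h'; simpl; auto. split; [simpl; lia|constructor].
  - destruct h' as [|h']; [lia|]. destruct t as [ts]; simpl. intros [H1 H2]; split; [lia|].
    eapply Forall_impl; [|exact H2]. intros a; apply IHh; auto; lia.
Qed.

Lemma NoDup_trees k h : NoDup (trees k h).
Proof.
  induction h.
  - simpl; constructor; [intros []|constructor].
  - change (NoDup (map Node (lists_upto k (trees k h)))).
    apply Injective_map_NoDup; [intros a b E; injection E; auto|]. apply NoDup_lists_upto; auto.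
Qed.

Lemma trees_incl k h k' h' t : (k <= k')%nat -> (h <= h')%nat ->
  In t (trees k h) -> In t (trees k' h').
Proof. intros; apply in_trees; apply in_trees in H1; eapply bounded_mono; eauto. Qed.

Definition tree_ind_forall (P : tree -> Prop)
  (H : forall ts, Forall P ts -> P (Node ts)) : forall t, P t :=
  fix F t := match t with
    Node ts => H ts ((fix G l : Forall P l :=
                      match l with [] => Forall_nil _ | x :: l' => Forall_cons _ (F x) (G l') end) ts)
  end.

Lemma bounded_list (L : list tree) :
  Forall (fun t => exists k h, bounded k h t) L -> exists k h, Forall (bounded k h) L.
Proof.
  induction 1 as [|t L [k [h Ht]] _ [k' [h' HL]]].
  - exists O, O; constructor.
  - exists (max k k'), (max h h'). constructor.
    + eapply bounded_mono; [| |exact Ht]; lia.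
    + eapply Forall_impl; [|exact HL]. intros a; apply bounded_mono; lia.
Qed.

Lemma tree_bounded t : exists k h, bounded k h t.
Proof.
  induction t using tree_ind_forall. apply bounded_list in H. destruct H as [k [h H]].
  exists (max k (length ts)), (S h). simpl. split; [lia|].
  eapply Forall_impl; [|exact H]. intros a; apply bounded_mono; lia.
Qed.

Lemma trees_cover (L : list tree) : exists k h, forall t, In t L -> In t (trees k h).
Proof.
  assert (Forall (fun t => exists k h, bounded k h t) L)
    by (apply Forall_forall; intros; apply tree_bounded).
  apply bounded_list in H. destruct H as [k [h H]]. exists k, h. intros t Ht.
  apply in_trees. rewrite Forall_forall in H; auto.
Qed.

Lemma lsum_trees_succ (U V : tree -> R) (c : nat -> R) k h :
  (forall ts, U (Node ts) = c (length ts) * lprod V ts) ->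
  lsum U (trees k (S h)) = lsum (fun j => c j * (lsum V (trees k h))^j) (seq 0 (S k)).
Proof.
  intros HU. change (trees k (S h)) with (map Node (lists_upto k (trees k h))).
  rewrite lsum_map. rewrite <- lsum_lists_upto. apply lsum_ext; auto.
Qed.

Lemma lsum_trees_mono (W : tree -> R) k h k' h' : (forall x, 0 <= W x) ->
  (k <= k')%nat -> (h <= h')%nat -> lsum W (trees k h) <= lsum W (trees k' h').
Proof.
  intros; apply lsum_le_incl; auto using NoDup_trees. intros; eapply trees_incl; eauto.
Qed.

Lemma gw_node p ts : gw_weight p (Node ts) = p (length ts) * lprod (gw_weight p) ts.
Proof. simpl. f_equal. induction ts; simpl; auto. rewrite IHts; auto. Qed.

Lemma forest_lprod p ts : forest_weight p ts = lprod (gw_weight p) ts.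
Proof. unfold forest_weight; induction ts; simpl; auto. rewrite IHts; auto. Qed.

Lemma gw_nonneg p t : (forall n, 0 <= p n) -> 0 <= gw_weight p t.
Proof.
  intros Hp. induction t using tree_ind_forall. rewrite gw_node. apply Rmult_le_pos; auto.
  apply lprod_nonneg. rewrite Forall_forall in H; auto.
Qed.

Lemma forest_nonneg p ts : (forall n, 0 <= p n) -> 0 <= forest_weight p ts.
Proof. intros; rewrite forest_lprod; apply lprod_nonneg; intros; apply gw_nonneg; auto. Qed.

Lemma pow_edges_node z ts :
  z ^ tree_edges (Node ts) = lprod (fun t => z * z ^ tree_edges t) ts.
Proof.
  assert (E : tree_edges (Node ts) = fold_right (fun t n => S (tree_edges t) + n)%nat O ts)
    by (simpl; induction ts; simpl; auto).
  rewrite E; clear E. induction ts; [simpl; auto|]. cbn [fold_right lprod].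
  rewrite pow_add, IHts. simpl; ring.
Qed.

Definition indicator (b : bool) : R := if b then 1 else 0.

Lemma reaches_level_node n ts :
  indicator (Nat.ltb 0 (tree_level (S n) (Node ts)))
  = 1 - lprod (fun t => 1 - indicator (Nat.ltb 0 (tree_level n t))) ts.
Proof.
  assert (E : tree_level (S n) (Node ts) = fold_right (fun t m => tree_level n t + m)%nat O ts)
    by (simpl; induction ts; simpl; auto).
  rewrite E; clear E. induction ts as [|t ts IH]; [simpl; unfold indicator; simpl; ring|].
  cbn [fold_right lprod].
  destruct (tree_level n t) as [|m]; cbn [Nat.add].
  - rewrite IH. unfold indicator; simpl. ring.
  - unfold indicator; simpl. ring.
Qed.

Definition psum (a : nat -> R) (N : nat) : R := lsum a (seq 0 N).

Lemma psum_S a N : psum a (S N) = psum a N + a N.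
Proof. unfold psum. rewrite seq_S, lsum_app. simpl. ring. Qed.

Lemma psum_shift u N : psum u (S N) = u O + psum (fun m => u (S m)) N.
Proof. induction N. - unfold psum; simpl; ring. - rewrite psum_S, IHN, psum_S. ring. Qed.

Lemma sum_f_psum a n : sum_f_R0 a n = psum a (S n).
Proof.
  induction n; simpl sum_f_R0.
  - unfold psum; simpl; ring.
  - rewrite IHn, (psum_S a (S n)); ring.
Qed.

Lemma psum_mono a N M : (forall n, 0 <= a n) -> (N <= M)%nat -> psum a N <= psum a M.
Proof. intros Ha H; induction H; [lra|]. rewrite psum_S. specialize (Ha m); lra. Qed.

Lemma psum_nonneg a N : (forall n, 0 <= a n) -> 0 <= psum a N.
Proof. intros; apply lsum_nonneg; auto. Qed.

Lemma psum_ext a b N : (forall n, (n < N)%nat -> a n = b n) -> psum a N = psum b N.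
Proof. intros H. unfold psum. apply lsum_ext. intros x Hx. apply in_seq in Hx. apply H; lia. Qed.

Lemma psum_le a b N : (forall n, (n < N)%nat -> a n <= b n) -> psum a N <= psum b N.
Proof. intros H. unfold psum. apply lsum_le. intros x Hx. apply in_seq in Hx. apply H; lia. Qed.

Lemma psum_minus a b N : psum (fun n => a n - b n) N = psum a N - psum b N.
Proof. apply lsum_minus. Qed.

Lemma psum_scal a c N : psum (fun n => c * a n) N = c * psum a N.
Proof. apply lsum_scal. Qed.

Lemma isum_le a l : (forall n, 0 <= a n) -> infinite_sum a l -> forall N, psum a N <= l.
Proof.
  intros Ha Hl N. destruct (Rle_lt_dec (psum a N) l) as [|H]; auto.
  destruct (Hl (psum a N - l)) as [N' HN']; [lra|].
  specialize (HN' (max N N') ltac:(lia)). rewrite sum_f_psum in HN'. unfold Rdist in HN'.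
  assert (psum a N <= psum a (S (max N N'))) by (apply psum_mono; auto; lia).
  apply Rabs_def2 in HN'. lra.
Qed.

Lemma isum_approx a l eps : infinite_sum a l -> 0 < eps ->
  exists N, forall n, (N <= n)%nat -> l - eps < psum a n.
Proof.
  intros Hl He. destruct (Hl eps He) as [N HN]. exists (S N). intros n Hn.
  destruct n as [|n]; [lia|]. specialize (HN n ltac:(lia)). rewrite sum_f_psum in HN.
  unfold Rdist in HN. apply Rabs_def2 in HN. lra.
Qed.

Lemma isum_le_bound u l B : infinite_sum u l -> (forall N, psum u N <= B) -> l <= B.
Proof.
  intros H HB. destruct (Rle_lt_dec l B) as [|Hlt]; auto.
  destruct (isum_approx u l (l - B) H ltac:(lra)) as [N HN].
  specialize (HN N (le_n _)). specialize (HB N). lra.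
Qed.

Lemma isum_of_sup a l : (forall n, 0 <= a n) -> (forall N, psum a N <= l) ->
  (forall eps, 0 < eps -> exists N, l - eps < psum a N) -> infinite_sum a l.
Proof.
  intros Ha Hub Happ eps He. destruct (Happ eps He) as [N HN]. exists N. intros n Hn.
  rewrite sum_f_psum. unfold Rdist.
  assert (psum a N <= psum a (S n)) by (apply psum_mono; auto; lia).
  specialize (Hub (S n)). rewrite Rabs_left1; lra.
Qed.

Lemma isum_unique a l l' : infinite_sum a l -> infinite_sum a l' -> l = l'.
Proof. intros H1 H2. apply (UL_sequence (fun n => sum_f_R0 a n)); auto. Qed.

Lemma isum_minus a b la lb : infinite_sum a la -> infinite_sum b lb ->
  infinite_sum (fun n => a n - b n) (la - lb).
Proof.
  intros Ha Hb eps He.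
  destruct (Ha (eps/2)) as [N1 H1]; [lra|]. destruct (Hb (eps/2)) as [N2 H2]; [lra|].
  exists (max N1 N2). intros n Hn. specialize (H1 n ltac:(lia)). specialize (H2 n ltac:(lia)).
  unfold Rdist in *. rewrite !sum_f_psum in *. rewrite psum_minus.
  apply Rabs_def2 in H1, H2. apply Rabs_def1; lra.
Qed.

Definition series_sum (u : nat -> R) : R := epsilon (inhabits 0) (fun l => infinite_sum u l).

Lemma series_sum_spec u B : (forall n, 0 <= u n) -> (forall N, psum u N <= B) ->
  infinite_sum u (series_sum u).
Proof.
  intros Hu HB. unfold series_sum. apply epsilon_spec.
  destruct (completeness (fun r => exists N, r = psum u N)) as [l [H1 H2]].
  - exists B. intros r [N ->]; auto.
  - exists 0, O. reflexivity.
  - exists l. apply isum_of_sup; auto.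
    + intros N; apply H1; eauto.
    + intros eps He. apply not_all_not_ex. intros Hn. assert (l <= l - eps); [|lra].
      apply H2. intros r [N ->]. specialize (Hn N). lra.
Qed.

Lemma pow_le_one x m : 0 <= x <= 1 -> x ^ m <= 1.
Proof. intros H. rewrite <- (pow1 m). apply pow_incr; lra. Qed.

Lemma pow_diff_le x y m : 0 <= y <= x -> x <= 1 -> x ^ m - y ^ m <= INR m * (x - y).
Proof.
  intros Hy Hx. induction m; [simpl; lra|]. rewrite S_INR. cbn [pow].
  assert (0 <= y ^ m <= 1) by (split; [apply pow_le; lra|apply pow_le_one; lra]).
  assert (y ^ m <= x ^ m) by (apply pow_incr; lra).
  replace (x * x ^ m - y * y ^ m) with (x * (x ^ m - y ^ m) + y ^ m * (x - y)) by ring.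
  assert (x * (x ^ m - y ^ m) <= x ^ m - y ^ m).
  { replace (x ^ m - y ^ m) with (1 * (x ^ m - y ^ m)) at 2 by ring.
    apply Rmult_le_compat_r; lra. }
  assert (y ^ m * (x - y) <= 1 * (x - y)) by (apply Rmult_le_compat_r; lra). nra.
Qed.

Lemma pow_diff_mono x y a b m : 0 <= y <= x -> y <= b -> 0 <= b -> x - y <= a - b ->
  x ^ m - y ^ m <= a ^ m - b ^ m.
Proof.
  intros Hy Hyb Hb Hd. induction m; simpl; [lra|].
  assert (y ^ m <= x ^ m) by (apply pow_incr; lra).
  assert (y ^ m <= b ^ m) by (apply pow_incr; lra).
  assert (0 <= y ^ m) by (apply pow_le; lra).
  replace (x * x ^ m - y * y ^ m) with (x * (x ^ m - y ^ m) + y ^ m * (x - y)) by ring.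
  replace (a * a ^ m - b * b ^ m) with (a * (a ^ m - b ^ m) + b ^ m * (a - b)) by ring.
  assert (x * (x ^ m - y ^ m) <= a * (a ^ m - b ^ m)) by (apply Rmult_le_compat; lra).
  assert (y ^ m * (x - y) <= b ^ m * (a - b)) by (apply Rmult_le_compat; lra).
  lra.
Qed.

Lemma pow_mvt a b m : 0 <= a <= b ->
  (b - a) * INR (S m) * a ^ m <= b ^ S m - a ^ S m <= (b - a) * INR (S m) * b ^ m.
Proof.
  intros Hab. induction m.
  - simpl. lra.
  - rewrite (S_INR (S m)). cbn [pow] in *. destruct IHm as [L U].
    set (n := INR (S m)) in *. set (A := a ^ m) in *. set (B := b ^ m) in *.
    assert (HA : 0 <= A) by (apply pow_le; lra). assert (HAB : A <= B) by (apply pow_incr; lra).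
    assert (Hn : 0 <= n) by apply pos_INR.
    assert (E : b * (b * B) - a * (a * A) = b * (b * B - a * A) + a * A * (b - a)) by ring.
    rewrite E.
    assert (P1 : 0 <= (b - a) * n * A) by (apply Rmult_le_pos; [apply Rmult_le_pos|]; lra).
    assert (P2 : a * ((b - a) * n * A) <= b * ((b - a) * n * A)) by (apply Rmult_le_compat_r; lra).
    assert (P3 : b * ((b - a) * n * A) <= b * (b * B - a * A)) by (apply Rmult_le_compat_l; lra).
    assert (P4 : b * (b * B - a * A) <= b * ((b - a) * n * B)) by (apply Rmult_le_compat_l; lra).
    assert (P5 : a * A * (b - a) <= b * B * (b - a))
      by (apply Rmult_le_compat_r; [lra|apply Rmult_le_compat; lra]).
    split; nra.
Qed.

(** [(m+1) w^m] is bounded by the geometric series [1/(1-w)]. *)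
Lemma pow_bound w m : 0 <= w < 1 -> INR (S m) * w ^ m <= / (1 - w).
Proof.
  intros Hw.
  assert (H1 : INR (S m) * w ^ m <= psum (fun j => w ^ j) (S m)).
  { induction m.
    - unfold psum; simpl; lra.
    - rewrite psum_S, S_INR.
      assert (w ^ S m <= w ^ m) by (simpl; assert (0 <= w ^ m) by (apply pow_le; lra); nra).
      assert (0 <= w ^ S m) by (apply pow_le; lra).
      assert (INR (S m) * w ^ S m <= INR (S m) * w ^ m)
        by (apply Rmult_le_compat_l; [apply pos_INR|lra]). lra. }
  assert (H2 : psum (fun j => w ^ j) (S m) * (1 - w) = 1 - w ^ S m).
  { clear H1. induction m.
    - unfold psum; simpl; ring.
    - rewrite psum_S. rewrite Rmult_plus_distr_r, IHm. simpl; ring. }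
  assert (0 <= w ^ S m) by (apply pow_le; lra).
  apply Rle_trans with (psum (fun j => w ^ j) (S m)); auto.
  apply Rmult_le_reg_r with (1 - w); [lra|]. rewrite Rinv_l by lra. lra.
Qed.

Lemma small_mult K eps : 0 <= K -> 0 < eps -> K * (eps / (K + 1)) <= eps.
Proof.
  intros HK He. unfold Rdiv. rewrite <- Rmult_assoc, (Rmult_comm K), Rmult_assoc.
  assert (K * / (K + 1) <= 1).
  { apply Rmult_le_reg_r with (K + 1); [lra|]. rewrite Rmult_assoc, Rinv_l; lra. }
  replace eps with (eps * 1) at 2 by ring. apply Rmult_le_compat_l; lra.
Qed.

Lemma psum_pow_lipschitz c N s X : (forall n, 0 <= c n) -> 0 <= s <= X -> X <= 1 ->
  psum (fun j => c j * X ^ j) N - psum (fun j => c j * s ^ j) N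
  <= psum (fun j => c j * INR j) N * (X - s).
Proof.
  intros Hc Hs HX. rewrite <- psum_minus, Rmult_comm, <- psum_scal. apply psum_le.
  intros n _. rewrite <- Rmult_minus_distr_l.
  replace ((X - s) * (c n * INR n)) with (c n * (INR n * (X - s))) by ring.
  apply Rmult_le_compat_l; auto. apply pow_diff_le; lra.
Qed.

Definition tree_sum_is (W : tree -> R) (X : R) : Prop :=
  (forall k h, lsum W (trees k h) <= X) /\
  (forall eps, 0 < eps -> exists k h, X - eps < lsum W (trees k h)).

Lemma tree_sum_exists W B : (forall k h, lsum W (trees k h) <= B) -> exists X, tree_sum_is W X.
Proof.
  intros HB. destruct (completeness (fun r => exists k h, r = lsum W (trees k h))) as [X [H1 H2]].
  - exists B. intros r [k [h ->]]; auto.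
  - exists (lsum W (trees 0 0)). eauto.
  - exists X. split.
    + intros k h; apply H1; eauto.
    + intros eps He. apply not_all_not_ex. intros Hn.
      assert (X <= X - eps); [|lra]. apply H2. intros r [k [h ->]].
      specialize (Hn k). apply not_ex_all_not with (n := h) in Hn. lra.
Qed.

Lemma tree_sum_unique W X Y : tree_sum_is W X -> tree_sum_is W Y -> X = Y.
Proof.
  intros [A1 A2] [B1 B2]. destruct (Rtotal_order X Y) as [H|[H|H]]; auto.
  - destruct (B2 (Y - X)) as [k [h Hk]]; [lra|]. specialize (A1 k h); lra.
  - destruct (A2 (X - Y)) as [k [h Hk]]; [lra|]. specialize (B1 k h); lra.
Qed.

(** Since the enumerations are monotone, the approximation is eventual. *)
Lemma tree_sum_approx W X eps : (forall x, 0 <= W x) -> tree_sum_is W X -> 0 < eps ->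
  exists k0 h0, forall k h, (k0 <= k)%nat -> (h0 <= h)%nat -> X - eps < lsum W (trees k h).
Proof.
  intros HW [_ H] He. destruct (H eps He) as [k0 [h0 Hk]]. exists k0, h0. intros k h Hk' Hh'.
  eapply Rlt_le_trans; [exact Hk|]. apply lsum_trees_mono; auto.
Qed.

Lemma tree_sum_nonneg W X : (forall x, 0 <= W x) -> tree_sum_is W X -> 0 <= X.
Proof. intros HW [H _]. eapply Rle_trans; [|apply (H 0%nat 0%nat)]. apply lsum_nonneg; auto. Qed.

Lemma tree_sum_le W V X Y : (forall t, W t <= V t) -> tree_sum_is W X -> tree_sum_is V Y -> X <= Y.
Proof.
  intros HWV HX HY. destruct (Rle_lt_dec X Y) as [|Hlt]; auto.
  destruct (proj2 HX (X - Y)) as [k [h Hk]]; [lra|].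
  assert (lsum W (trees k h) <= lsum V (trees k h)) by (apply lsum_le; auto).
  pose proof (proj1 HY k h). lra.
Qed.

Lemma tree_sum_scal W X c : 0 <= c -> tree_sum_is W X -> tree_sum_is (fun t => c * W t) (c * X).
Proof.
  intros Hc [H1 H2]. split.
  - intros k h. rewrite lsum_scal. apply Rmult_le_compat_l; auto.
  - intros eps He. destruct (Req_dec c 0) as [->|Hc0].
    + exists 0%nat, 0%nat. rewrite lsum_scal. lra.
    + destruct (H2 (eps / c)) as [k [h Hkh]]. { apply Rdiv_lt_0_compat; lra. }
      exists k, h. rewrite lsum_scal.
      assert (c * (X - eps / c) < c * lsum W (trees k h)) by (apply Rmult_lt_compat_l; lra).
      replace (c * (X - eps / c)) with (c * X - eps) in H by (field; auto). lra.
Qed.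

Lemma tree_sum_nnsum W X : (forall t, 0 <= W t) -> tree_sum_is W X -> nnsum W = X.
Proof.
  intros HW [H1 H2]. apply nnsum_by_exhaustion with (E := trees); auto.
  - apply NoDup_trees.
  - intros L _. destruct (trees_cover L) as [k [h H]]. exists k, h. auto.
Qed.

(** The fixed-point equation of generating functions: if [U] is built at the
    root from the children's weights [V] with coefficients [c], and [V] sums
    to [X <= 1], then [U] sums to the power series [sum_j c j X^j]. *)
Lemma tree_sum_recursion (U V : tree -> R) (c : nat -> R) X FX :
  (forall n, 0 <= c n) -> (forall t, 0 <= V t) ->
  (forall ts, U (Node ts) = c (length ts) * lprod V ts) ->
  tree_sum_is V X -> X <= 1 -> infinite_sum (fun j => c j * X ^ j) FX -> tree_sum_is U FX.
Proof.
  intros Hc HV HU HX HX1 HF.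
  assert (X0 : 0 <= X) by (eapply tree_sum_nonneg; eauto).
  assert (Hterm : forall j, 0 <= c j * X ^ j)
    by (intros; apply Rmult_le_pos; auto; apply pow_le; auto).
  assert (Hsig : forall k h, 0 <= lsum V (trees k h) <= X)
    by (intros; split; [apply lsum_nonneg; auto|apply HX]).
  split.
  - intros k [|h].
    + simpl. rewrite Rplus_0_r, HU. simpl. rewrite Rmult_1_r.
      eapply Rle_trans; [|apply (isum_le _ _ Hterm HF 1)]. unfold psum; simpl; lra.
    + rewrite (lsum_trees_succ U V c k h HU).
      fold (psum (fun j => c j * (lsum V (trees k h)) ^ j) (S k)).
      eapply Rle_trans; [|apply (isum_le _ _ Hterm HF (S k))].
      apply psum_le. intros n _. apply Rmult_le_compat_l; auto. apply pow_incr. apply Hsig.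
  - intros eps He.
    destruct (isum_approx _ _ (eps / 2) HF) as [N HN]; [lra|].
    set (K := psum (fun j => c j * INR j) N).
    assert (K0 : 0 <= K) by (apply psum_nonneg; intros; apply Rmult_le_pos; auto; apply pos_INR).
    destruct (tree_sum_approx V X (eps / 2 / (K + 1)) HV HX) as [k0 [h0 Hk0]].
    { apply Rdiv_lt_0_compat; lra. }
    exists (max k0 N), (S h0).
    rewrite (lsum_trees_succ U V c _ h0 HU).
    fold (psum (fun j => c j * (lsum V (trees (max k0 N) h0)) ^ j) (S (max k0 N))).
    set (s := lsum V (trees (max k0 N) h0)).
    assert (Hs : X - eps / 2 / (K + 1) < s) by (apply Hk0; lia).
    specialize (HN N (le_n _)).
    assert (psum (fun j => c j * s ^ j) N <= psum (fun j => c j * s ^ j) (S (max k0 N))).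
    { apply psum_mono; [intros; apply Rmult_le_pos; auto; apply pow_le; apply Hsig|lia]. }
    pose proof (psum_pow_lipschitz c N s X Hc (Hsig _ _) HX1).
    assert (K * (X - s) <= K * (eps / 2 / (K + 1))) by (apply Rmult_le_compat_l; lra).
    pose proof (small_mult K (eps / 2) K0 ltac:(lra)). fold K in H0. lra.
Qed.

Lemma tree_sum_gap W V X Y : (forall t, 0 <= V t <= W t) ->
  tree_sum_is W X -> tree_sum_is V Y ->
  forall k h, lsum W (trees k h) - lsum V (trees k h) <= X - Y.
Proof.
  intros HVW HX HY k h.
  destruct (Rle_lt_dec (lsum W (trees k h) - lsum V (trees k h)) (X - Y)) as [|Hlt]; auto.
  destruct (tree_sum_approx V Y (lsum W (trees k h) - lsum V (trees k h) - (X - Y)))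
    as [k0 [h0 Hk0]]; [intros; apply HVW|auto|lra|].
  specialize (Hk0 (max k k0) (max h h0) ltac:(lia) ltac:(lia)).
  assert (lsum W (trees k h) - lsum V (trees k h)
          <= lsum W (trees (max k k0) (max h h0)) - lsum V (trees (max k k0) (max h h0))).
  { rewrite <- !lsum_minus. apply lsum_trees_mono; try lia. intros t; pose proof (HVW t); lra. }
  pose proof (proj1 HX (max k k0) (max h h0)). lra.
Qed.

Lemma psum_difference_lower (c : nat -> R) N a b Sx Z :
  (forall n, 0 <= c n) -> 0 <= b <= a -> b <= Z -> a <= Sx -> Sx <= 1 ->
  psum (fun m => c m * Sx ^ m - c m * Z ^ m) N - psum (fun m => c m * INR m) N * (Sx - a)
  <= psum (fun m => c m * a ^ m - c m * b ^ m) N.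
Proof.
  intros Hc Hab HbZ HaS HS.
  pose proof (psum_pow_lipschitz c N a Sx Hc ltac:(lra) HS).
  assert (psum (fun m => c m * Sx ^ m - c m * Z ^ m) N
          - (psum (fun m => c m * Sx ^ m) N - psum (fun m => c m * a ^ m) N)
          <= psum (fun m => c m * a ^ m - c m * b ^ m) N).
  { rewrite <- !psum_minus. apply psum_le. intros m _.
    assert (b ^ m <= Z ^ m) by (apply pow_incr; lra).
    assert (c m * b ^ m <= c m * Z ^ m) by (apply Rmult_le_compat_l; auto). lra. }
  lra.
Qed.

Lemma series_difference_sup (c : nat -> R) (s1 s0 : nat -> nat -> R) Sx Z DS DZ :
  (forall n, 0 <= c n) ->
  (forall k h, 0 <= s0 k h <= s1 k h) -> (forall k h, s1 k h - s0 k h <= Sx - Z) ->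
  (forall k h, s0 k h <= Z) -> (forall k h, s1 k h <= Sx) -> Sx <= 1 -> 0 <= Z <= Sx ->
  (forall eps, 0 < eps -> exists k0 h0, forall k h,
     (k0 <= k)%nat -> (h0 <= h)%nat -> Sx - eps < s1 k h) ->
  infinite_sum (fun m => c m * Sx ^ m) DS -> infinite_sum (fun m => c m * Z ^ m) DZ ->
  (forall k h, psum (fun m => c m * s1 k h ^ m) (S k)
               - psum (fun m => c m * s0 k h ^ m) (S k) <= DS - DZ) /\
  (forall eps, 0 < eps -> exists k h, DS - DZ - eps <
     psum (fun m => c m * s1 k h ^ m) (S k) - psum (fun m => c m * s0 k h ^ m) (S k)).
Proof.
  intros Hc Hs Hd H0 H1 HS HZ Happ HDS HDZ.
  assert (Hdiff := isum_minus _ _ _ _ HDS HDZ). simpl in Hdiff.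
  assert (Hterm : forall x y m, 0 <= y <= x -> 0 <= c m * x ^ m - c m * y ^ m).
  { intros x y m Hxy. rewrite <- Rmult_minus_distr_l. apply Rmult_le_pos; auto.
    assert (y ^ m <= x ^ m) by (apply pow_incr; lra). lra. }
  split.
  - intros k h. rewrite <- psum_minus.
    eapply Rle_trans; [|apply (isum_le _ _ (fun m => Hterm Sx Z m HZ) Hdiff (S k))].
    apply psum_le. intros m _. rewrite <- !Rmult_minus_distr_l. apply Rmult_le_compat_l; auto.
    specialize (Hs k h). apply pow_diff_mono; auto; lra.
  - intros eps He. destruct (isum_approx _ _ (eps/2) Hdiff) as [N HN]; [lra|].
    set (K := psum (fun m => c m * INR m) N).
    assert (K0 : 0 <= K) by (apply psum_nonneg; intros; apply Rmult_le_pos; auto; apply pos_INR).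
    destruct (Happ (eps / 2 / (K + 1))) as [k0 [h0 Hk0]]; [apply Rdiv_lt_0_compat; lra|].
    exists (max k0 N), h0. specialize (Hk0 (max k0 N) h0 ltac:(lia) ltac:(lia)).
    set (k := max k0 N) in *. specialize (Hs k h0). specialize (H0 k h0). specialize (H1 k h0).
    rewrite <- psum_minus.
    assert (psum (fun m => c m * s1 k h0 ^ m - c m * s0 k h0 ^ m) N
            <= psum (fun m => c m * s1 k h0 ^ m - c m * s0 k h0 ^ m) (S k))
      by (apply psum_mono; [intros; apply Hterm; lra|lia]).
    pose proof (psum_difference_lower c N (s1 k h0) (s0 k h0) Sx Z Hc Hs H0 H1 HS). fold K in H2.
    assert (K * (Sx - s1 k h0) <= K * (eps / 2 / (K + 1))) by (apply Rmult_le_compat_l; lra).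
    pose proof (small_mult K (eps/2) K0 ltac:(lra)).
    specialize (HN N (le_n _)). lra.
Qed.

(** ** The law of the spine component A^i *)

Definition confs (k h : nat) : list conf :=
  flat_map (fun ts => map (fun j => (j, ts)) (seq 0 (S (length ts)))) (lists_upto k (trees k h)).

Lemma A_law_val p i j ts : (j < S (length ts))%nat ->
  A_law p i (j, ts) = p (S (length ts)) * forest_weight p ts.
Proof.
  intros Hj. unfold A_law. replace (length ts + 2 - 1)%nat with (S (length ts)) by lia.
  replace (Nat.ltb j (S (length ts))) with true by (symmetry; apply Nat.ltb_lt; auto).
  field. apply not_0_INR; lia.
Qed.

Lemma A_law_zero p i j ts : ~ (j < S (length ts))%nat -> A_law p i (j, ts) = 0.
Proof.
  intros Hj. unfold A_law. replace (length ts + 2 - 1)%nat with (S (length ts)) by lia.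
  replace (Nat.ltb j (S (length ts))) with false; auto.
  symmetry; apply Nat.ltb_nlt; auto.
Qed.

Lemma A_law_nonneg p i c : (forall n, 0 <= p n) -> 0 <= A_law p i c.
Proof.
  intros Hp. destruct c as [j ts]. destruct (Nat.lt_decidable j (S (length ts))).
  - rewrite A_law_val; auto. apply Rmult_le_pos; auto. apply forest_nonneg; auto.
  - rewrite A_law_zero; auto; lra.
Qed.

Lemma NoDup_confs k h : NoDup (confs k h).
Proof.
  apply NoDup_flat_map.
  - apply NoDup_lists_upto, NoDup_trees.
  - intros ts _. apply Injective_map_NoDup; [intros a b E; injection E; auto|apply seq_NoDup].
  - intros x y z _ _ Hx Hy. apply in_map_iff in Hx, Hy.
    destruct Hx as [a [<- _]]; destruct Hy as [b [E _]]. injection E; auto.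
Qed.

Lemma confs_cover p i (G : list tree -> R) (L : list conf) :
  exists k h, forall c, In c L -> A_law p i c * G (snd c) <> 0 -> In c (confs k h).
Proof.
  destruct (trees_cover (concat (map snd L))) as [k1 [h Hk1]].
  set (k2 := list_max (map (fun c => length (snd c)) L)).
  exists (max k1 k2), h. intros [j ts] Hc Hne.
  destruct (Nat.lt_decidable j (S (length ts))) as [Hj|Hj];
    [|rewrite A_law_zero in Hne; auto; lra].
  unfold confs. apply in_flat_map. exists ts. split.
  - apply in_lists_upto. split.
    + assert (length ts <= k2)%nat; [|lia].
      assert (Hm := proj1 (list_max_le (map (fun c => length (snd c)) L) k2) (le_n _)).
      rewrite Forall_forall in Hm. apply Hm. apply in_map_iff. exists (j, ts); auto.
    + intros t Ht. apply trees_incl with k1 h; [lia|lia|]. apply Hk1.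
      apply in_concat. exists ts; split; auto. apply in_map_iff. exists (j, ts); auto.
  - apply in_map_iff. exists j; split; auto. apply in_seq; lia.
Qed.

(** Coefficients of the derivative F'(w) = sum_m (m+1) p(m+1) w^m: the
    number [m] of Galton-Watson subtrees of s_i has weight [dcoef p m]. *)
Definition dcoef (p : nat -> R) (m : nat) : R := INR (S m) * p (S m).

Lemma dcoef_nonneg p m : (forall n, 0 <= p n) -> 0 <= dcoef p m.
Proof. intros; unfold dcoef; apply Rmult_le_pos; auto; apply pos_INR. Qed.

(** Summing over the spine position produces the size-biased coefficients. *)
Lemma lsum_confs p i (G : list tree -> R) (rho : tree -> R) k h :
  (forall ts, forest_weight p ts * G ts = lprod rho ts) ->
  lsum (fun c => A_law p i c * G (snd c)) (confs k h)
  = psum (fun m => dcoef p m * (lsum rho (trees k h)) ^ m) (S k).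
Proof.
  intros HG. unfold confs. rewrite lsum_flat_map.
  rewrite (lsum_ext _ (fun ts => dcoef p (length ts) * lprod rho ts)).
  - rewrite lsum_lists_upto. reflexivity.
  - intros ts _. rewrite lsum_map.
    rewrite (lsum_ext _ (fun _ => p (S (length ts)) * forest_weight p ts * G ts)).
    + rewrite lsum_const, length_seq. unfold dcoef. rewrite <- HG. ring.
    + intros j Hj. apply in_seq in Hj. simpl snd. rewrite A_law_val; auto; lia.
Qed.

Definition root_weight (c : nat -> R) (rho : tree -> R) (t : tree) : R :=
  match t with Node ts => c (length ts) * lprod rho ts end.

Lemma A_law_expectation p i (G : list tree -> R) (rho : tree -> R) X DX :
  (forall n, 0 <= p n) -> (forall t, 0 <= rho t) -> (forall ts, 0 <= G ts) ->
  (forall ts, forest_weight p ts * G ts = lprod rho ts) ->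
  tree_sum_is rho X -> X <= 1 -> infinite_sum (fun m => dcoef p m * X ^ m) DX ->
  nnsum (fun c => A_law p i c * G (snd c)) = DX.
Proof.
  intros Hp Hrho HG HfG HX HX1 HD.
  assert (HU : tree_sum_is (root_weight (dcoef p) rho) DX).
  { apply (tree_sum_recursion _ rho (dcoef p) X); auto. intros; apply dcoef_nonneg; auto. }
  assert (HUnn : forall t, 0 <= root_weight (dcoef p) rho t).
  { intros [ts]; simpl. apply Rmult_le_pos; [apply dcoef_nonneg; auto|apply lprod_nonneg; auto]. }
  assert (Heq : forall k h, lsum (fun c => A_law p i c * G (snd c)) (confs k h)
                           = lsum (root_weight (dcoef p) rho) (trees k (S h))).
  { intros k h. rewrite (lsum_confs p i G rho); auto.
    rewrite (lsum_trees_succ _ rho (dcoef p)); auto. }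
  apply nnsum_by_exhaustion with (E := confs).
  - intros c. apply Rmult_le_pos; auto. apply A_law_nonneg; auto.
  - apply NoDup_confs.
  - intros L _. apply confs_cover.
  - intros k h. rewrite Heq. apply HU.
  - intros eps He. destruct (proj2 HU eps He) as [k [h Hk]]. exists k, h. rewrite Heq.
    eapply Rlt_le_trans; [exact Hk|]. apply lsum_trees_mono; auto.
Qed.

(** ** Generating-function identities for Galton-Watson trees and A^i *)

Section GaltonWatson.

Context (p : nat -> R) (Hod : offspring_distribution p).

Let Hp : forall n, 0 <= p n := proj1 Hod.

Lemma offspring_psum_le1 N : psum p N <= 1.
Proof. apply isum_le; [exact Hp|exact (proj2 Hod)]. Qed.

Lemma gw_lsum_le1 k h : lsum (gw_weight p) (trees k h) <= 1.
Proof.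
  induction h.
  - cbn [trees lsum]. rewrite Rplus_0_r, gw_node. simpl. rewrite Rmult_1_r.
    pose proof (offspring_psum_le1 1). unfold psum in H; simpl in H. lra.
  - rewrite (lsum_trees_succ _ (gw_weight p) p); [|apply gw_node].
    fold (psum (fun j => p j * lsum (gw_weight p) (trees k h) ^ j) (S k)).
    eapply Rle_trans; [|apply (offspring_psum_le1 (S k))]. apply psum_le. intros n _.
    assert (0 <= lsum (gw_weight p) (trees k h)) by (apply lsum_nonneg; intros; apply gw_nonneg; auto).
    assert (lsum (gw_weight p) (trees k h) ^ n <= 1) by (apply pow_le_one; lra).
    specialize (Hp n). nra.
Qed.

Lemma dominated_tree_sum (W : tree -> R) : (forall t, 0 <= W t <= gw_weight p t) ->
  tree_sum_is W (nnsum W) /\ 0 <= nnsum W <= 1.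
Proof.
  intros HW.
  assert (Hle : forall k h, lsum W (trees k h) <= 1).
  { intros k h. eapply Rle_trans; [|apply (gw_lsum_le1 k h)]. apply lsum_le. intros; apply HW. }
  destruct (tree_sum_exists W 1 Hle) as [X HX].
  rewrite (tree_sum_nnsum W X); auto; [|intros; apply HW]. split; auto. split.
  - eapply tree_sum_nonneg; [|exact HX]. intros; apply HW.
  - destruct (Rle_lt_dec X 1) as [|Hlt]; auto.
    destruct (proj2 HX (X - 1)) as [k [h Hk]]; [lra|]. pose proof (Hle k h); lra.
Qed.

Lemma gw_bounds t : 0 <= gw_weight p t <= gw_weight p t.
Proof. split; [apply gw_nonneg; auto|lra]. Qed.

Context (F : R -> R)
  (HF : forall x, 0 <= x <= 1 -> infinite_sum (fun k => p k * x ^ k) (F x)).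

Lemma gw_total_fixed_point : nnsum (gw_weight p) = F (nnsum (gw_weight p)).
Proof.
  destruct (dominated_tree_sum _ gw_bounds) as [HS HS1].
  eapply tree_sum_unique; [exact HS|].
  apply (tree_sum_recursion _ (gw_weight p) p (nnsum (gw_weight p)));
    [exact Hp|intros; apply gw_nonneg; auto|apply gw_node|exact HS|apply HS1|apply HF; lra].
Qed.

Definition gw_edge_weight (z : R) (t : tree) : R := gw_weight p t * z ^ tree_edges t.

Lemma gw_edge_weight_node z ts :
  gw_edge_weight z (Node ts) = p (length ts) * lprod (fun t => z * gw_edge_weight z t) ts.
Proof.
  unfold gw_edge_weight. rewrite gw_node, pow_edges_node, Rmult_assoc, lprod_mult. f_equal.
  apply lprod_ext. intros; unfold gw_edge_weight; ring.
Qed.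

(** Part (a), combinatorially: <z^|A^i|> = F'(X), where
    X = z <z^|T|> solves X = z F(X), with T a Galton-Watson tree. *)
Lemma size_gf_identity i z : 0 <= z <= 1 ->
  exists X, 0 <= X <= z /\ X = z * F X /\
    forall DX, infinite_sum (fun m => dcoef p m * X ^ m) DX -> A_size_gf p i z = DX.
Proof.
  intros Hz.
  set (rho := fun t => z * gw_edge_weight z t).
  assert (Hrho : forall t, 0 <= rho t <= gw_weight p t).
  { intros t. unfold rho, gw_edge_weight. assert (0 <= gw_weight p t) by (apply gw_nonneg; auto).
    assert (0 <= z ^ tree_edges t <= 1) by (split; [apply pow_le|apply pow_le_one]; lra).
    assert (gw_weight p t * z ^ tree_edges t <= gw_weight p t) by nra.
    split; [apply Rmult_le_pos; [lra|apply Rmult_le_pos; lra]|nra]. }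
  destruct (dominated_tree_sum rho Hrho) as [HX [X0 _]].
  destruct (dominated_tree_sum _ gw_bounds) as [HS [_ HS1]].
  set (X := nnsum rho) in *.
  assert (Xz : X <= z).
  { apply Rle_trans with (z * nnsum (gw_weight p)); [|nra].
    apply (tree_sum_le rho (fun t => z * gw_weight p t)); [|exact HX|apply tree_sum_scal; auto; lra].
    intros t. unfold rho, gw_edge_weight. assert (0 <= gw_weight p t) by (apply gw_nonneg; auto).
    assert (z ^ tree_edges t <= 1) by (apply pow_le_one; lra).
    apply Rmult_le_compat_l; [lra|]. nra. }
  assert (HW : tree_sum_is (gw_edge_weight z) (F X)).
  { apply (tree_sum_recursion _ rho p X);
      [exact Hp|intros; apply Hrho|intros ts; apply gw_edge_weight_node|exact HX|lra|apply HF; lra]. }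
  exists X. split; [lra|split].
  - eapply tree_sum_unique; [exact HX|]. apply tree_sum_scal; [lra|exact HW].
  - intros DX HDX. unfold A_size_gf.
    change (nnsum (fun c => A_law p i c * (fun ts => z ^ tree_edges (Node ts)) (snd c)) = DX).
    apply (A_law_expectation p i _ rho X);
      [exact Hp|intros; apply Hrho|intros; apply pow_le; lra| |exact HX|lra|exact HDX].
    intros ts. rewrite forest_lprod, pow_edges_node, lprod_mult. apply lprod_ext.
    intros t; unfold rho, gw_edge_weight; ring.
Qed.

Definition extinct_weight (n : nat) (t : tree) : R :=
  gw_weight p t * (1 - indicator (Nat.ltb 0 (tree_level n t))).

Lemma extinct_weight_node n ts :
  extinct_weight (S n) (Node ts) = p (length ts) * lprod (extinct_weight n) ts.
Proof.
  unfold extinct_weight. rewrite gw_node, reaches_level_node.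
  replace (1 - (1 - lprod (fun t => 1 - indicator (0 <? tree_level n t)) ts))
    with (lprod (fun t => 1 - indicator (0 <? tree_level n t)) ts) by ring.
  rewrite Rmult_assoc, lprod_mult. reflexivity.
Qed.

Lemma extinct_weight_bounds n t : 0 <= extinct_weight n t <= gw_weight p t.
Proof.
  unfold extinct_weight. assert (0 <= gw_weight p t) by (apply gw_nonneg; auto).
  destruct (Nat.ltb 0 (tree_level n t)); unfold indicator; lra.
Qed.

Lemma extinct_sum_0 : nnsum (extinct_weight 0) = 0.
Proof.
  assert (E : forall t, extinct_weight 0 t = 0)
    by (intros [ts]; unfold extinct_weight; simpl; unfold indicator; simpl; ring).
  apply tree_sum_nnsum; [intros; apply extinct_weight_bounds|].
  split; [intros k h|intros eps He; exists 0%nat, 0%nat];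
    rewrite (lsum_ext _ (fun _ => 0)), lsum_const by (intros; apply E); lra.
Qed.

Lemma extinct_sum_step n : nnsum (extinct_weight (S n)) = F (nnsum (extinct_weight n)).
Proof.
  destruct (dominated_tree_sum _ (extinct_weight_bounds n)) as [Hn Hn1].
  destruct (dominated_tree_sum _ (extinct_weight_bounds (S n))) as [HSn _].
  eapply tree_sum_unique; [exact HSn|].
  apply (tree_sum_recursion _ (extinct_weight n) p (nnsum (extinct_weight n)));
    [exact Hp|intros; apply extinct_weight_bounds|apply extinct_weight_node|exact Hn|apply Hn1|apply HF; exact Hn1].
Qed.

Lemma extinct_sum_le_total n : nnsum (extinct_weight n) <= nnsum (gw_weight p).
Proof.
  destruct (dominated_tree_sum _ (extinct_weight_bounds n)) as [Hn _].
  destruct (dominated_tree_sum _ gw_bounds) as [HS _].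
  apply (tree_sum_le _ _ _ _ (fun t => proj2 (extinct_weight_bounds n t)) Hn HS).
Qed.

End GaltonWatson.

Definition survival_weight (p : nat -> R) (i n : nat) (c : conf) : R :=
  A_law p i c * indicator (Nat.ltb 0 (tree_level (S n) (Node (snd c)))).

(** On the enumeration, A^i reaches level [n+1] iff one of its subtrees
    reaches level [n]; this is a difference of two truncated series in the
    sums of all trees and of the trees extinct by level [n]. *)
Lemma lsum_survival_confs p i n k h : lsum (survival_weight p i n) (confs k h)
  = psum (fun m => dcoef p m * lsum (gw_weight p) (trees k h) ^ m) (S k)
    - psum (fun m => dcoef p m * lsum (extinct_weight p n) (trees k h) ^ m) (S k).
Proof.
  set (G0 := fun ts : list tree => lprod (fun t => 1 - indicator (Nat.ltb 0 (tree_level n t))) ts).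
  rewrite (lsum_ext _ (fun c => A_law p i c * (fun _ => 1) (snd c) - A_law p i c * G0 (snd c))).
  - rewrite lsum_minus, (lsum_confs p i (fun _ => 1) (gw_weight p)),
      (lsum_confs p i G0 (extinct_weight p n)); auto.
    + intros ts. unfold G0, extinct_weight. rewrite forest_lprod, lprod_mult. auto.
    + intros ts. rewrite forest_lprod; ring.
  - intros c _. unfold survival_weight. rewrite reaches_level_node. unfold G0. ring.
Qed.

(** Part (b), combinatorially: nu(X^i_(n+1) > 0) = F'(P(T finite)) - F'(Z_n). *)
Lemma survival_identity p i n DS DZ :
  offspring_distribution p ->
  infinite_sum (fun m => dcoef p m * (nnsum (gw_weight p)) ^ m) DS ->
  infinite_sum (fun m => dcoef p m * (nnsum (extinct_weight p n)) ^ m) DZ ->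
  A_survival p i (S n) = DS - DZ.
Proof.
  intros Hod HDS HDZ. pose proof (proj1 Hod) as Hp.
  pose proof (extinct_weight_bounds p Hod n) as Hb.
  destruct (dominated_tree_sum p Hod _ (gw_bounds p Hod)) as [HS HS1].
  destruct (dominated_tree_sum p Hod _ Hb) as [HZt [HZ0 _]].
  pose proof (extinct_sum_le_total p Hod n) as HZS.
  set (s1 := fun k h => lsum (gw_weight p) (trees k h)).
  set (s0 := fun k h => lsum (extinct_weight p n) (trees k h)).
  assert (Hs : forall k h, 0 <= s0 k h <= s1 k h)
    by (intros k h; split; [apply lsum_nonneg|apply lsum_le]; intros; apply Hb).
  destruct (series_difference_sup (dcoef p) s1 s0 _ _ DS DZ (fun m => dcoef_nonneg p m Hp)
              Hs (tree_sum_gap _ _ _ _ Hb HS HZt) (proj1 HZt) (proj1 HS) (proj2 HS1)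
              ltac:(lra) (fun eps He => tree_sum_approx _ _ eps (fun t => gw_nonneg p t Hp) HS He)
              HDS HDZ) as [U A].
  change (nnsum (survival_weight p i n) = DS - DZ).
  apply nnsum_by_exhaustion with (E := confs).
  - intros c. apply Rmult_le_pos; [apply A_law_nonneg; auto|].
    unfold indicator; destruct (Nat.ltb _ _); lra.
  - apply NoDup_confs.
  - intros L _. apply (confs_cover p i (fun ts => indicator (Nat.ltb 0 (tree_level (S n) (Node ts))))).
  - intros k h. rewrite lsum_survival_confs. apply U.
  - intros eps He. destruct (A eps He) as [k [h Hk]]. exists k, h.
    rewrite lsum_survival_confs. auto.
Qed.

(** ** The derivative series and the convexity bounds *)

(** F'(w) = sum_m (m+1) p(m+1) w^m, which converges for 0 <= w < 1. *)
Definition deriv_series (p : nat -> R) (w : R) : R := series_sum (fun m => dcoef p m * w ^ m).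

Lemma deriv_series_spec p w : offspring_distribution p -> 0 <= w < 1 ->
  infinite_sum (fun m => dcoef p m * w ^ m) (deriv_series p w).
Proof.
  intros [Hp H1] Hw. apply series_sum_spec with (B := / (1 - w)).
  - intros; apply Rmult_le_pos; [apply dcoef_nonneg; auto|apply pow_le; lra].
  - intros N. apply Rle_trans with (/ (1 - w) * psum (fun m => p (S m)) N).
    + rewrite <- psum_scal. apply psum_le. intros m _. unfold dcoef.
      pose proof (pow_bound w m Hw). specialize (Hp (S m)). nra.
    + assert (psum (fun m => p (S m)) N <= 1).
      { apply Rle_trans with (psum p (S N)).
        - rewrite psum_shift. specialize (Hp O). lra.
        - apply isum_le; auto. }
      assert (0 < / (1 - w)) by (apply Rinv_0_lt_compat; lra). nra.
Qed.

Lemma deriv_series_terms_nonneg p w m : offspring_distribution p -> 0 <= w ->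
  0 <= dcoef p m * w ^ m.
Proof. intros Hod Hw. apply Rmult_le_pos; [apply dcoef_nonneg, Hod|apply pow_le; lra]. Qed.

Lemma convexity_bounds p F a b : offspring_distribution p ->
  (forall x, 0 <= x <= 1 -> infinite_sum (fun k => p k * x ^ k) (F x)) -> 0 <= a <= b -> b <= 1 ->
  (a < 1 -> (b - a) * deriv_series p a <= F b - F a) /\
  (b < 1 -> F b - F a <= (b - a) * deriv_series p b).
Proof.
  intros Hod HF Hab Hb. pose proof (proj1 Hod) as Hp.
  assert (Hd := isum_minus _ _ _ _ (HF b ltac:(lra)) (HF a ltac:(lra))). simpl in Hd.
  assert (Hdn : forall k, 0 <= p k * b ^ k - p k * a ^ k).
  { intros k. rewrite <- Rmult_minus_distr_l. apply Rmult_le_pos; auto.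
    assert (a ^ k <= b ^ k) by (apply pow_incr; lra). lra. }
  assert (Hshift : forall N, psum (fun k => p k * b ^ k - p k * a ^ k) (S N)
                             = psum (fun m => p (S m) * (b ^ S m - a ^ S m)) N).
  { intros N. rewrite psum_shift. simpl pow at 1 2. replace (p O * 1 - p O * 1) with 0 by ring.
    rewrite Rplus_0_l. apply psum_ext. intros; ring. }
  split.
  - intros Ha1. destruct (Req_dec a b) as [->|Hne]; [lra|].
    assert (deriv_series p a <= (F b - F a) / (b - a)).
    { apply isum_le_bound with (u := fun m => dcoef p m * a ^ m); [apply deriv_series_spec; auto; lra|].
      intros N. apply Rmult_le_reg_r with (b - a); [lra|].
      unfold Rdiv. rewrite Rmult_assoc, Rinv_l, Rmult_1_r by lra.
      apply Rle_trans with (psum (fun k => p k * b ^ k - p k * a ^ k) (S N)); [|apply isum_le; auto].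
      rewrite Hshift, Rmult_comm, <- psum_scal. apply psum_le. intros m _. unfold dcoef.
      pose proof (pow_mvt a b m Hab) as [L _]. specialize (Hp (S m)). nra. }
    apply Rmult_le_reg_r with (/ (b - a)); [apply Rinv_0_lt_compat; lra|].
    replace ((b - a) * deriv_series p a * / (b - a)) with (deriv_series p a) by (field; lra). auto.
  - intros Hb1.
    assert (HD : forall N, psum (fun m => dcoef p m * b ^ m) N <= deriv_series p b)
      by (apply isum_le; [intros; apply deriv_series_terms_nonneg; auto; lra|apply deriv_series_spec; auto; lra]).
    apply isum_le_bound with (u := fun k => p k * b ^ k - p k * a ^ k); auto.
    intros [|N].
    + unfold psum; simpl. apply Rmult_le_pos; [lra|].
      apply Rle_trans with (psum (fun m => dcoef p m * b ^ m) 0); [unfold psum; simpl; lra|apply HD].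
    + rewrite Hshift. apply Rle_trans with ((b - a) * psum (fun m => dcoef p m * b ^ m) N).
      * rewrite <- psum_scal. apply psum_le. intros m _. unfold dcoef.
        pose proof (pow_mvt a b m Hab) as [_ U]. specialize (Hp (S m)). nra.
      * apply Rmult_le_compat_l; [lra|apply HD].
Qed.

Lemma Rpow_pos x a : 0 < x -> 0 < Rpower x a.
Proof. intros; unfold Rpower; apply exp_pos. Qed.

Lemma Rpow_mul x y a : 0 < x -> 0 < y -> Rpower (x * y) a = Rpower x a * Rpower y a.
Proof. intros; rewrite Rpower_mult_distr; auto. Qed.

Lemma Rpow_S x a : 0 < x -> Rpower x (a + 1) = x * Rpower x a.
Proof. intros; rewrite Rpower_plus, Rpower_1; auto; ring. Qed.

Lemma Rpow_1 a : Rpower 1 a = 1.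
Proof. unfold Rpower; rewrite ln_1, Rmult_0_r, exp_0; auto. Qed.

Lemma Rpow_lt1 x a : 0 < x < 1 -> 0 < a -> Rpower x a < 1.
Proof. intros Hx Ha. rewrite <- (Rpow_1 a). apply Rlt_Rpower_l; lra. Qed.

Lemma Rpow_cont c a : 0 < c -> forall eps, 0 < eps -> exists eta, 0 < eta /\
  forall u, Rabs (u - c) < eta -> Rabs (Rpower u a - Rpower c a) < eps.
Proof.
  intros Hc eps He. pose proof (derivable_pt_lim_power c a Hc) as D.
  set (l := a * Rpower c (a - 1)) in *.
  destruct (D 1 Rlt_0_1) as [del Hdel].
  assert (Hl : 0 < Rabs l + 1) by (pose proof (Rabs_pos l); lra).
  exists (Rmin del (eps / (Rabs l + 1))). split.
  { apply Rmin_pos; [apply cond_pos|apply Rdiv_lt_0_compat; lra]. }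
  intros u Hu. destruct (Req_dec u c) as [->|Hne].
  - rewrite Rminus_diag, Rabs_R0; auto.
  - set (t := u - c). assert (Ht : t <> 0) by (unfold t; lra).
    assert (Htd : Rabs t < del) by (eapply Rlt_le_trans; [exact Hu|apply Rmin_l]).
    specialize (Hdel t Ht Htd). replace (c + t) with u in Hdel by (unfold t; ring).
    assert (E : Rpower u a - Rpower c a = t * ((Rpower u a - Rpower c a) / t)) by (field; auto).
    rewrite E, Rabs_mult.
    assert (Rabs ((Rpower u a - Rpower c a) / t) <= Rabs l + 1).
    { apply Rabs_def2 in Hdel. destruct Hdel.
      destruct (Rcase_abs ((Rpower u a - Rpower c a) / t)) as [N|P];
      [rewrite Rabs_left; auto|rewrite Rabs_right; auto];
      pose proof (Rle_abs l); pose proof (Rle_abs (-l)); rewrite Rabs_Ropp in *; lra. }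
    assert (Rabs t < eps / (Rabs l + 1)) by (eapply Rlt_le_trans; [exact Hu|apply Rmin_r]).
    apply Rle_lt_trans with (Rabs t * (Rabs l + 1)).
    + apply Rmult_le_compat_l; auto. apply Rabs_pos.
    + apply Rmult_lt_reg_r with (/ (Rabs l + 1)); [apply Rinv_0_lt_compat; lra|].
      rewrite Rmult_assoc, Rinv_r; [|lra]. unfold Rdiv in H0. lra.
Qed.

Lemma Rpow_deriv1 A : forall eps, 0 < eps -> exists del, 0 < del /\
  forall t, t <> 0 -> Rabs t < del -> Rabs ((Rpower (1 + t) A - 1) / t - A) < eps.
Proof.
  intros eps He. pose proof (derivable_pt_lim_power 1 A Rlt_0_1) as D.
  rewrite Rpow_1, Rmult_1_r in D. destruct (D eps He) as [del Hdel].
  exists del; split; [apply cond_pos|]. intros t Ht Htd. specialize (Hdel t Ht Htd).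
  rewrite Rpow_1 in Hdel. auto.
Qed.

Lemma small_pow r B c : 0 <= r < 1 -> 0 <= B -> 0 < c -> exists n, r ^ n * B < c.
Proof.
  intros Hr HB Hc.
  destruct (pow_lt_1_zero r ltac:(rewrite Rabs_right; lra) (c / (B + 1))) as [N HN].
  { apply Rdiv_lt_0_compat; lra. }
  exists N. specialize (HN N (le_n _)). rewrite Rabs_right in HN; [|apply Rle_ge, pow_le; lra].
  assert (c / (B + 1) * B < c).
  { replace (c / (B + 1) * B) with (c - c / (B + 1)) by (field; lra).
    assert (0 < c / (B + 1)) by (apply Rdiv_lt_0_compat; lra). lra. }
  destruct (Req_dec B 0) as [->|]; [rewrite Rmult_0_r; lra|].
  assert (r ^ N * B < c / (B + 1) * B) by (apply Rmult_lt_compat_r; lra). lra.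
Qed.

Definition lim0 (f : R -> R) (L : R) : Prop :=
  forall eps, 0 < eps -> exists del, 0 < del /\ forall x, 0 < x < del -> Rabs (f x - L) < eps.

Lemma lim0_limit1_in f L : lim0 f L <-> limit1_in f (fun x => 0 < x) L 0.
Proof.
  unfold lim0, limit1_in, limit_in. simpl. unfold Rdist. split.
  - intros H eps He. destruct (H eps He) as [d [Hd Hx]]. exists d. split; [lra|].
    intros x [Hx0 Hxd]. rewrite Rminus_0_r, Rabs_right in Hxd by lra. apply Hx; lra.
  - intros H eps He. destruct (H eps He) as [d [Hd Hx]]. exists d. split; [lra|].
    intros x [Hx0 Hxd]. apply Hx. split; auto. rewrite Rminus_0_r, Rabs_right; lra.
Qed.

Lemma lim0_mult f g L M : lim0 f L -> lim0 g M -> lim0 (fun x => f x * g x) (L * M).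
Proof. rewrite !lim0_limit1_in. apply limit_mul. Qed.

Lemma lim0_inv f L : lim0 f L -> L <> 0 -> lim0 (fun x => / f x) (/ L).
Proof. rewrite !lim0_limit1_in. apply limit_inv. Qed.

Lemma lim0_const c : lim0 (fun _ => c) c.
Proof. intros eps He; exists 1; split; [lra|]. intros; rewrite Rminus_diag, Rabs_R0; auto. Qed.

Lemma lim0_ext f g L del0 : 0 < del0 -> (forall x, 0 < x < del0 -> f x = g x) ->
  lim0 g L -> lim0 f L.
Proof.
  intros Hd E H eps He. destruct (H eps He) as [d [Hd' Hx]].
  exists (Rmin d del0). split; [apply Rmin_pos; lra|].
  intros x [Hx0 Hxd]. rewrite E; [apply Hx|]; split; auto.
  - eapply Rlt_le_trans; [exact Hxd|apply Rmin_l].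
  - eapply Rlt_le_trans; [exact Hxd|apply Rmin_r].
Qed.

Lemma lim0_scale f L mu : 0 < mu -> lim0 f L -> lim0 (fun x => f (mu * x)) L.
Proof.
  intros Hm H eps He. destruct (H eps He) as [d [Hd Hx]].
  exists (d / mu). split; [apply Rdiv_lt_0_compat; lra|].
  intros x [Hx0 Hxd]. apply Hx. split; [nra|].
  apply Rmult_lt_compat_l with (r := mu) in Hxd; auto.
  replace (mu * (d / mu)) with d in Hxd by (field; lra). lra.
Qed.

Lemma lim0_comp f L (X : R -> R) del0 : lim0 f L -> 0 < del0 ->
  (forall y, 0 < y < del0 -> 0 < X y) ->
  (forall e, 0 < e -> exists del, 0 < del /\ forall y, 0 < y < del -> X y < e) ->
  lim0 (fun y => f (X y)) L.
Proof.
  intros Hf Hd0 Hpos HX eps He. destruct (Hf eps He) as [d [Hd Hx]].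
  destruct (HX d Hd) as [d' [Hd' Hy]].
  exists (Rmin d' del0). split; [apply Rmin_pos; lra|]. intros y [Hy0 Hyd].
  assert (y < d') by (eapply Rlt_le_trans; [exact Hyd|apply Rmin_l]).
  assert (y < del0) by (eapply Rlt_le_trans; [exact Hyd|apply Rmin_r]).
  apply Hx. split; [apply Hpos; lra|apply Hy; lra].
Qed.

Lemma cv_ext u v L N : Un_cv u L -> (forall n, (N <= n)%nat -> u n = v n) -> Un_cv v L.
Proof.
  intros H E eps He. destruct (H eps He) as [M HM]. exists (max M N). intros n Hn.
  rewrite <- E by lia. apply HM; lia.
Qed.

Lemma cv_const c : Un_cv (fun _ => c) c.
Proof. intros eps He; exists O; intros; unfold Rdist; rewrite Rminus_diag, Rabs_R0; auto. Qed.

Lemma cv_squeeze l u v L : Un_cv l L -> Un_cv u L -> (forall n, l n <= v n <= u n) -> Un_cv v L.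
Proof.
  intros Hl Hu Hv eps He. destruct (Hl eps He) as [N1 H1]. destruct (Hu eps He) as [N2 H2].
  exists (max N1 N2). intros n Hn. specialize (H1 n ltac:(lia)). specialize (H2 n ltac:(lia)).
  specialize (Hv n). unfold Rdist in *. apply Rabs_def2 in H1, H2. apply Rabs_def1; lra.
Qed.

Lemma cv_inv u L : Un_cv u L -> L <> 0 -> Un_cv (fun n => / u n) (/ L).
Proof.
  intros H HL eps He.
  assert (HaL : 0 < Rabs L) by (apply Rabs_pos_lt; auto).
  destruct (H (Rabs L / 2)) as [N1 H1]; [lra|].
  destruct (H (eps * (Rabs L * Rabs L) / 2)) as [N2 H2];
    [apply Rmult_lt_0_compat; [apply Rmult_lt_0_compat; nra|lra]|].
  exists (max N1 N2). intros n Hn. specialize (H1 n ltac:(lia)). specialize (H2 n ltac:(lia)).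
  unfold Rdist in *.
  assert (Hu : Rabs L / 2 < Rabs (u n)).
  { pose proof (Rabs_triang_inv L (u n)). rewrite Rabs_minus_sym in H1. lra. }
  assert (Hun : u n <> 0) by (intros E; rewrite E, Rabs_R0 in Hu; lra).
  replace (/ u n - / L) with ((L - u n) / (u n * L)) by (field; auto).
  unfold Rdiv. rewrite Rabs_mult, Rabs_inv, Rabs_mult, Rabs_minus_sym.
  apply Rmult_lt_reg_r with (Rabs (u n) * Rabs L); [nra|].
  rewrite Rmult_assoc, Rinv_l by nra.
  assert (eps * (Rabs L / 2 * Rabs L) < eps * (Rabs (u n) * Rabs L)).
  { apply Rmult_lt_compat_l; auto; apply Rmult_lt_compat_r; auto. }
  replace (eps * (Rabs L * Rabs L) / 2) with (eps * (Rabs L / 2 * Rabs L)) in H2 by field. lra.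
Qed.

Lemma cv_of_shift u L : Un_cv (fun n => u (S n)) L -> Un_cv u L.
Proof.
  intros H eps He. destruct (H eps He) as [N HN]. exists (S N). intros n Hn.
  destruct n as [|n]; [lia|]. apply HN; lia.
Qed.

Lemma cv_shift u L : Un_cv u L -> Un_cv (fun n => u (S n)) L.
Proof. intros H eps He. destruct (H eps He) as [N HN]. exists N. intros n Hn. apply HN; lia. Qed.

Lemma cv_inv_INR : Un_cv (fun n => / INR n) 0.
Proof.
  intros eps He. destruct (archimed_cor1 eps He) as [N [HN HN0]]. exists N. intros n Hn.
  unfold Rdist. rewrite Rminus_0_r.
  assert (0 < INR N) by (apply lt_0_INR; auto). assert (INR N <= INR n) by (apply le_INR; auto).
  rewrite Rabs_right by (apply Rle_ge; left; apply Rinv_0_lt_compat; lra).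
  eapply Rle_lt_trans; [|exact HN]. apply Rinv_le_contravar; auto.
Qed.

Lemma cv_comp0 (phi : R -> R) L (s : nat -> R) : lim0 phi L -> (forall n, 0 < s n) ->
  (forall e, 0 < e -> exists N, forall n, (N <= n)%nat -> s n < e) ->
  Un_cv (fun n => phi (s n)) L.
Proof.
  intros Hp Hs Hs0 eps He. destruct (Hp eps He) as [d [Hd H]]. destruct (Hs0 d Hd) as [N HN].
  exists N. intros n Hn. unfold Rdist. apply H. split; auto.
Qed.

(** ** Regular variation of the tail of F *)

(** The analytic data: [h(x) = F(1-x) - (1-x) = x^(a+1) l1(x)] with [l1]
    slowly varying, and [d(x) = 1 - F'(1-x)] bracketing the increments of
    [h] as convexity of F dictates. *)
Record tail_model (a : R) (l1 h d : R -> R) : Prop := {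
  tm_index_pos : 0 < a;
  tm_slowly_varying : slowly_varying_0 l1;
  tm_h_zero : h 0 = 0;
  tm_h_power : forall x, 0 < x <= 1 -> h x = Rpower x (a + 1) * l1 x;
  tm_increment_upper : forall x y, 0 <= x <= y -> y <= 1 -> 0 < y -> h y - h x <= (y - x) * d y;
  tm_increment_lower : forall x y, 0 < x <= y -> y <= 1 -> (y - x) * d x <= h y - h x }.

Definition tail_ratio (h : R -> R) (x : R) : R := h x / x.

Lemma h_as_ratio (h : R -> R) x : 0 < x -> h x = x * tail_ratio h x.
Proof. intros; unfold tail_ratio; field; lra. Qed.

(** [Fshift h x = F(1 - x)] and [psi h x = h(x) / F(1 - x)]. *)
Definition Fshift (h : R -> R) (x : R) : R := 1 - x + h x.
Definition psi (h : R -> R) (x : R) : R := h x / Fshift h x.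

Lemma iter_contract (g : R -> R) del r x1 : 0 <= r ->
  (forall x, 0 < x < del -> g x <> 0 -> Rabs (g (/2 * x)) <= r * Rabs (g x)) ->
  0 < x1 < del -> (forall x, 0 < x <= x1 -> g x <> 0) ->
  forall n, Rabs (g ((/2) ^ n * x1)) <= r ^ n * Rabs (g x1).
Proof.
  intros Hr Hc Hx1 Hnz n. induction n; simpl.
  - rewrite !Rmult_1_l; lra.
  - assert (0 < (/2) ^ n) by (apply pow_lt; lra).
    assert ((/2) ^ n <= 1) by (apply pow_le_one; lra).
    assert (Hin : 0 < (/2) ^ n * x1 <= x1).
    { split; [apply Rmult_lt_0_compat; lra|]. rewrite <- (Rmult_1_l x1) at 2.
      apply Rmult_le_compat_r; lra. }
    rewrite Rmult_assoc. eapply Rle_trans; [apply Hc; [lra|apply Hnz; lra]|].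
    rewrite Rmult_assoc. apply Rmult_le_compat_l; auto.
Qed.

Lemma halvings_in (x1 : R) n : 0 < x1 -> 0 < (/2) ^ n * x1 <= x1.
Proof.
  intros Hx1. assert (0 < (/2) ^ n) by (apply pow_lt; lra).
  assert ((/2) ^ n <= 1) by (apply pow_le_one; lra).
  split; [apply Rmult_lt_0_compat; lra|]. rewrite <- (Rmult_1_l x1) at 2.
  apply Rmult_le_compat_r; lra.
Qed.

Section TailAnalysis.

Context {a : R} {l1 h d : R -> R} (HA : tail_model a l1 h d).

Let a_pos : 0 < a := tm_index_pos _ _ _ _ HA.
Let l1_slow : slowly_varying_0 l1 := tm_slowly_varying _ _ _ _ HA.
Let h_zero : h 0 = 0 := tm_h_zero _ _ _ _ HA.
Let h_power := tm_h_power _ _ _ _ HA.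
Let incr_upper := tm_increment_upper _ _ _ _ HA.
Let incr_lower := tm_increment_lower _ _ _ _ HA.

Notation g := (tail_ratio h).

Lemma ratio_power x : 0 < x <= 1 -> g x = Rpower x a * l1 x.
Proof. intros Hx. unfold tail_ratio. rewrite h_power, Rpow_S; auto; [|lra]. field; lra. Qed.

Lemma ratio_regular_variation lam : 0 < lam -> forall eps, 0 < eps ->
  exists del, 0 < del /\ forall x, 0 < x < del -> Rabs (g (lam * x) / g x - Rpower lam a) < eps.
Proof.
  intros Hl eps He. assert (Hp := Rpow_pos lam a Hl).
  destruct (l1_slow lam Hl (eps / Rpower lam a)) as [d0 [Hd0 Hx]]; [apply Rdiv_lt_0_compat; auto|].
  exists (Rmin d0 (Rmin 1 (/ lam))). split.
  { apply Rmin_pos; auto. apply Rmin_pos; [lra|apply Rinv_0_lt_compat; auto]. }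
  intros x [Hx0 Hxd].
  assert (x < d0) by (eapply Rlt_le_trans; [exact Hxd|apply Rmin_l]).
  assert (x < 1) by (eapply Rlt_le_trans; [exact Hxd|eapply Rle_trans; [apply Rmin_r|apply Rmin_l]]).
  assert (x < / lam) by (eapply Rlt_le_trans; [exact Hxd|eapply Rle_trans; [apply Rmin_r|apply Rmin_r]]).
  assert (lam * x < 1).
  { apply Rmult_lt_compat_l with (r := lam) in H1; auto. rewrite Rinv_r in H1; lra. }
  assert (0 < lam * x) by (apply Rmult_lt_0_compat; auto).
  rewrite !ratio_power by lra. rewrite Rpow_mul by auto.
  assert (Hxp := Rpow_pos x a Hx0).
  replace (Rpower lam a * Rpower x a * l1 (lam * x) / (Rpower x a * l1 x))
    with (Rpower lam a * (l1 (lam * x) / l1 x) * (Rpower x a * / Rpower x a))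
    by (unfold Rdiv; rewrite Rinv_mult; ring).
  rewrite Rinv_r, Rmult_1_r by lra.
  replace (Rpower lam a * (l1 (lam * x) / l1 x) - Rpower lam a)
    with (Rpower lam a * (l1 (lam * x) / l1 x - 1)) by ring.
  rewrite Rabs_mult, Rabs_right by lra.
  specialize (Hx x (conj Hx0 H)).
  apply Rmult_lt_compat_l with (r := Rpower lam a) in Hx; auto.
  replace (Rpower lam a * (eps / Rpower lam a)) with eps in Hx by (field; lra). auto.
Qed.

Lemma ratio_le_d x : 0 < x <= 1 -> g x <= d x.
Proof.
  intros Hx. unfold tail_ratio.
  pose proof (incr_upper 0 x ltac:(lra) ltac:(lra) ltac:(lra)) as H. rewrite h_zero in H.
  apply Rmult_le_reg_r with x; [lra|]. unfold Rdiv; rewrite Rmult_assoc, Rinv_l; lra.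
Qed.

(** By convexity, [g] is nondecreasing. *)
Lemma ratio_mono x y : 0 < x <= y -> y <= 1 -> g x <= g y.
Proof.
  intros Hx Hy. pose proof (ratio_le_d x ltac:(lra)).
  pose proof (incr_lower x y Hx Hy) as H3. rewrite (h_as_ratio h x), (h_as_ratio h y) in H3; try lra.
  assert ((y - x) * g x <= (y - x) * d x) by (apply Rmult_le_compat_l; lra).
  nra.
Qed.

Lemma ratio_half_contract : exists del r, 0 < del /\ 0 <= r < 1 /\
  forall x, 0 < x < del -> g x <> 0 -> Rabs (g (/2 * x)) <= r * Rabs (g x).
Proof.
  set (c := Rpower (/2) a).
  assert (Hc : 0 < c < 1) by (split; [apply Rpow_pos; lra|apply Rpow_lt1; lra]).
  destruct (ratio_regular_variation (/2) ltac:(lra) ((1 - c) / 2) ltac:(lra)) as [del [Hdel Hx]].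
  exists del, ((1 + c) / 2). split; auto. split; [lra|].
  intros x Hx0 Hg. specialize (Hx x Hx0). fold c in Hx.
  apply Rabs_def2 in Hx. destruct Hx as [Hx1 Hx2].
  assert (Rabs (g (/ 2 * x) / g x) <= (1 + c) / 2).
  { destruct (Rcase_abs (g (/ 2 * x) / g x)); [rewrite Rabs_left|rewrite Rabs_right]; auto; lra. }
  replace (g (/ 2 * x)) with (g (/ 2 * x) / g x * g x) by (field; auto).
  rewrite Rabs_mult. apply Rmult_le_compat_r; auto. apply Rabs_pos.
Qed.

Lemma ratio_nonneg x0 : 0 < x0 <= 1 -> 0 <= g x0.
Proof.
  intros Hx0. destruct (Rle_lt_dec 0 (g x0)) as [|Hneg]; auto. exfalso.
  destruct ratio_half_contract as [del [r [Hdel [Hr Hc]]]].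
  set (x1 := Rmin x0 (del / 2)).
  assert (Hx1 : 0 < x1 <= x0) by (split; [apply Rmin_pos; lra|apply Rmin_l]).
  assert (Hx1d : x1 < del) by (unfold x1; eapply Rle_lt_trans; [apply Rmin_r|lra]).
  assert (Hle : forall x, 0 < x <= x1 -> g x <= g x0) by (intros; apply ratio_mono; auto; lra).
  assert (Hnz : forall x, 0 < x <= x1 -> g x <> 0) by (intros x Hx; specialize (Hle x Hx); lra).
  pose proof (iter_contract g del r x1 (proj1 Hr) Hc (conj (proj1 Hx1) Hx1d) Hnz) as It.
  destruct (small_pow r (Rabs (g x1)) (- g x0) Hr (Rabs_pos _) ltac:(lra)) as [n Hn].
  specialize (It n). specialize (Hle _ (halvings_in x1 n (proj1 Hx1))).
  rewrite Rabs_left in It; lra.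
Qed.

Lemma ratio_pos x0 : 0 < x0 <= 1 -> 0 < g x0.
Proof.
  intros Hx0. destruct (Rle_lt_dec (g x0) 0) as [Hz|]; auto. exfalso.
  assert (Hzero : forall x, 0 < x <= x0 -> g x = 0).
  { intros x Hx. pose proof (ratio_nonneg x ltac:(lra)). pose proof (ratio_mono x x0 Hx ltac:(lra)). lra. }
  set (c := Rpower (/2) a). assert (Hc : 0 < c) by (apply Rpow_pos; lra).
  destruct (ratio_regular_variation (/2) ltac:(lra) c Hc) as [del [Hdel Hx]].
  set (x1 := Rmin x0 (del / 2)).
  assert (Hx1 : 0 < x1 <= x0) by (split; [apply Rmin_pos; lra|apply Rmin_l]).
  assert (Hx1d : x1 < del) by (unfold x1; eapply Rle_lt_trans; [apply Rmin_r|lra]).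
  specialize (Hx x1 (conj (proj1 Hx1) Hx1d)). fold c in Hx.
  rewrite (Hzero x1), (Hzero (/2 * x1)) in Hx; auto; [|lra].
  unfold Rdiv in Hx. rewrite Rmult_0_l, Rminus_0_l, Rabs_Ropp, Rabs_right in Hx; lra.
Qed.

Lemma d_pos x : 0 < x <= 1 -> 0 < d x.
Proof. intros; pose proof (ratio_pos x H); pose proof (ratio_le_d x H); lra. Qed.

Lemma h_pos x : 0 < x <= 1 -> 0 < h x.
Proof. intros. rewrite (h_as_ratio h x) by lra. apply Rmult_lt_0_compat; [lra|]. apply ratio_pos; auto. Qed.

Lemma h_mono x y : 0 < x <= y -> y <= 1 -> h x <= h y.
Proof.
  intros Hx Hy. rewrite (h_as_ratio h x), (h_as_ratio h y) by lra.
  pose proof (ratio_mono x y Hx Hy). pose proof (ratio_pos x ltac:(lra)). nra.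
Qed.

Lemma ratio_to0 : forall eps, 0 < eps -> exists del, 0 < del /\ forall x, 0 < x < del -> g x < eps.
Proof.
  intros eps He. destruct ratio_half_contract as [del [r [Hdel [Hr Hc]]]].
  set (x1 := Rmin 1 (del / 2)).
  assert (Hx1 : 0 < x1 <= 1) by (split; [apply Rmin_pos; lra|apply Rmin_l]).
  assert (Hx1d : x1 < del) by (unfold x1; eapply Rle_lt_trans; [apply Rmin_r|lra]).
  assert (Hnz : forall x, 0 < x <= x1 -> g x <> 0)
    by (intros x Hx; pose proof (ratio_pos x ltac:(lra)); lra).
  pose proof (iter_contract g del r x1 (proj1 Hr) Hc (conj (proj1 Hx1) Hx1d) Hnz) as It.
  destruct (small_pow r (Rabs (g x1)) eps Hr (Rabs_pos _) He) as [n Hn].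
  specialize (It n). pose proof (halvings_in x1 n (proj1 Hx1)) as Hxn.
  exists ((/2) ^ n * x1). split; [lra|]. intros x Hx.
  pose proof (ratio_mono x ((/2) ^ n * x1) ltac:(lra) ltac:(lra)).
  pose proof (ratio_pos ((/2) ^ n * x1) ltac:(lra)).
  rewrite Rabs_right in It; lra.
Qed.

(** Convexity brackets [d/g] by difference quotients of [g] at scales [1 ± t]. *)
Lemma d_ratio_bracket t x : 0 < t <= 1/2 -> 0 < x -> (1 + t) * x <= 1 ->
  (1 - (1 - t) * (g ((1 - t) * x) / g x)) / t <= d x / g x
  <= ((1 + t) * (g ((1 + t) * x) / g x) - 1) / t.
Proof.
  intros Ht Hx Hlx. set (lam := 1 + t) in *. set (mu := 1 - t).
  assert (HG : 0 < g x) by (apply ratio_pos; unfold lam in *; nra).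
  assert (Up : t * d x <= lam * g (lam * x) - g x).
  { pose proof (incr_lower x (lam * x) ltac:(unfold lam in *; nra) Hlx) as H3.
    rewrite (h_as_ratio h x), (h_as_ratio h (lam * x)) in H3 by (unfold lam in *; nra).
    replace (lam * x - x) with (t * x) in H3 by (unfold lam; ring).
    apply Rmult_le_reg_l with x; auto. nra. }
  assert (Lo : g x - mu * g (mu * x) <= t * d x).
  { pose proof (incr_upper (mu * x) x ltac:(unfold mu in *; nra) ltac:(unfold lam in *; nra) Hx) as H2.
    rewrite (h_as_ratio h x), (h_as_ratio h (mu * x)) in H2 by (unfold mu in *; nra).
    replace (x - mu * x) with (t * x) in H2 by (unfold mu; ring).
    apply Rmult_le_reg_l with x; auto. nra. }
  split; unfold Rdiv; apply Rmult_le_reg_r with (g x * t); try nra.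
  - replace (d x * / g x * (g x * t)) with (t * d x) by (field; lra).
    replace ((1 - mu * (g (mu * x) * / g x)) * / t * (g x * t))
      with (g x - mu * g (mu * x)) by (field; lra). lra.
  - replace (d x * / g x * (g x * t)) with (t * d x) by (field; lra).
    replace ((lam * (g (lam * x) * / g x) - 1) * / t * (g x * t))
      with (lam * g (lam * x) - g x) by (field; lra). lra.
Qed.

Lemma d_ratio_eventual_bounds t eta : 0 < t <= 1/2 -> 0 < eta ->
  exists del, 0 < del /\ forall x, 0 < x < del ->
    (1 - Rpower (1 - t) (a + 1)) / t - eta < d x / g x < (Rpower (1 + t) (a + 1) - 1) / t + eta.
Proof.
  intros Ht He. set (lam := 1 + t). set (mu := 1 - t).
  destruct (ratio_regular_variation lam ltac:(unfold lam; lra) (eta * t / lam))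
    as [d1 [Hd1 R1]]; [apply Rdiv_lt_0_compat; [nra|unfold lam; lra]|].
  destruct (ratio_regular_variation mu ltac:(unfold mu; lra) (eta * t / mu))
    as [d2 [Hd2 R2]]; [apply Rdiv_lt_0_compat; [nra|unfold mu; lra]|].
  exists (Rmin d1 (Rmin d2 (/ lam))). split.
  { apply Rmin_pos; auto. apply Rmin_pos; auto. apply Rinv_0_lt_compat; unfold lam; lra. }
  intros x [Hx0 Hxd].
  assert (x < d1) by (eapply Rlt_le_trans; [exact Hxd|apply Rmin_l]).
  assert (x < d2) by (eapply Rlt_le_trans; [exact Hxd|eapply Rle_trans; [apply Rmin_r|apply Rmin_l]]).
  assert (Xl : x < / lam) by (eapply Rlt_le_trans; [exact Hxd|eapply Rle_trans; [apply Rmin_r|apply Rmin_r]]).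
  assert (Hlx : lam * x < 1).
  { apply Rmult_lt_compat_l with (r := lam) in Xl; [|unfold lam; lra].
    rewrite Rinv_r in Xl; unfold lam in *; lra. }
  destruct (d_ratio_bracket t x Ht Hx0 ltac:(fold lam; lra)) as [Lo Up]. fold lam mu in Lo, Up.
  specialize (R1 x (conj Hx0 H)). specialize (R2 x (conj Hx0 H0)).
  set (Rl := g (lam * x) / g x) in *. set (Rm := g (mu * x) / g x) in *.
  apply Rabs_def2 in R1, R2.
  rewrite (Rpow_S lam), (Rpow_S mu) by (unfold lam, mu; lra).
  assert (lam * Rl < lam * Rpower lam a + eta * t).
  { replace (lam * Rpower lam a + eta * t) with (lam * (Rpower lam a + eta * t / lam))
      by (field; unfold lam; lra).
    apply Rmult_lt_compat_l; unfold lam in *; lra. }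
  assert (mu * Rm < mu * Rpower mu a + eta * t).
  { replace (mu * Rpower mu a + eta * t) with (mu * (Rpower mu a + eta * t / mu))
      by (field; unfold mu; lra).
    apply Rmult_lt_compat_l; unfold mu in *; lra. }
  split.
  - eapply Rlt_le_trans; [|exact Lo]. apply Rmult_lt_reg_r with t; [lra|].
    replace (((1 - mu * Rpower mu a) / t - eta) * t) with (1 - mu * Rpower mu a - eta * t)
      by (field; lra).
    replace ((1 - mu * Rm) / t * t) with (1 - mu * Rm) by (field; lra). lra.
  - eapply Rle_lt_trans; [exact Up|]. apply Rmult_lt_reg_r with t; [lra|].
    replace (((lam * Rpower lam a - 1) / t + eta) * t) with (lam * Rpower lam a - 1 + eta * t)
      by (field; lra).
    replace ((lam * Rl - 1) / t * t) with (lam * Rl - 1) by (field; lra). lra.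
Qed.

(** The key asymptotic relation [d(x) ~ (a+1) g(x)] as [x -> 0+]: let the
    scale [t] tend to [0] in the previous bounds. *)
Lemma d_over_ratio_limit : lim0 (fun x => d x / g x) (a + 1).
Proof.
  intros eps He.
  destruct (Rpow_deriv1 (a + 1) (eps / 2) ltac:(lra)) as [del1 [Hdel1 HD]].
  set (t := Rmin (del1 / 2) (1 / 2)).
  assert (Ht : 0 < t <= 1/2) by (split; [apply Rmin_pos; lra|apply Rmin_r]).
  assert (Htd : t < del1) by (unfold t; eapply Rle_lt_trans; [apply Rmin_l|lra]).
  assert (HU := HD t ltac:(lra) ltac:(rewrite Rabs_right; lra)).
  assert (HL := HD (- t) ltac:(lra) ltac:(rewrite Rabs_Ropp, Rabs_right; lra)).
  replace (1 + - t) with (1 - t) in HL by ring.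
  replace ((Rpower (1 - t) (a + 1) - 1) / - t) with ((1 - Rpower (1 - t) (a + 1)) / t)
    in HL by (field; lra).
  destruct (d_ratio_eventual_bounds t (eps / 2) Ht ltac:(lra)) as [del [Hdel B]].
  exists del. split; auto. intros x Hx. specialize (B x Hx).
  apply Rabs_def2 in HU, HL. apply Rabs_def1; lra.
Qed.

Lemma ratio_uniform c : 0 < c -> forall eps, 0 < eps ->
  exists del eta, 0 < del /\ 0 < eta /\ forall x u, 0 < x < del -> Rabs (u - c) < eta ->
    Rabs (g (u * x) / g x - Rpower c a) < eps.
Proof.
  intros Hc eps He.
  destruct (Rpow_cont c a Hc (eps / 2) ltac:(lra)) as [eta0 [Heta0 Hcont]].
  set (e1 := Rmin (eta0 / 2) (c / 2)).
  assert (He1 : 0 < e1 <= c / 2) by (split; [apply Rmin_pos; lra|apply Rmin_r]).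
  assert (He1' : e1 < eta0) by (unfold e1; eapply Rle_lt_trans; [apply Rmin_l|lra]).
  set (mp := c + e1). set (mm := c - e1).
  assert (Cp := Hcont mp ltac:(unfold mp; rewrite Rabs_right; lra)).
  assert (Cm := Hcont mm ltac:(unfold mm; rewrite Rabs_left1; lra)).
  destruct (ratio_regular_variation mp ltac:(unfold mp; lra) (eps / 2) ltac:(lra)) as [dp [Hdp Rp]].
  destruct (ratio_regular_variation mm ltac:(unfold mm; lra) (eps / 2) ltac:(lra)) as [dm [Hdm Rm]].
  exists (Rmin (Rmin dp 1) (Rmin dm (/ mp))), e1. split; [|split; [lra|]].
  { apply Rmin_pos; [apply Rmin_pos; lra|]. apply Rmin_pos; auto.
    apply Rinv_0_lt_compat; unfold mp; lra. }
  intros x u [Hx0 Hxd] Hu. apply Rabs_def2 in Hu. destruct Hu as [Hu1 Hu2].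
  assert (Xd1 : x < dp) by (eapply Rlt_le_trans; [exact Hxd|eapply Rle_trans; [apply Rmin_l|apply Rmin_l]]).
  assert (X1 : x < 1) by (eapply Rlt_le_trans; [exact Hxd|eapply Rle_trans; [apply Rmin_l|apply Rmin_r]]).
  assert (Xd2 : x < dm) by (eapply Rlt_le_trans; [exact Hxd|eapply Rle_trans; [apply Rmin_r|apply Rmin_l]]).
  assert (Xl : x < / mp) by (eapply Rlt_le_trans; [exact Hxd|eapply Rle_trans; [apply Rmin_r|apply Rmin_r]]).
  assert (Hlx : mp * x < 1).
  { apply Rmult_lt_compat_l with (r := mp) in Xl; [|unfold mp; lra].
    rewrite Rinv_r in Xl; unfold mp in *; lra. }
  specialize (Rp x (conj Hx0 Xd1)). specialize (Rm x (conj Hx0 Xd2)).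
  assert (HG : 0 < g x) by (apply ratio_pos; lra).
  assert (L1 : g (mm * x) <= g (u * x)) by (apply ratio_mono; unfold mm, mp in *; nra).
  assert (L2 : g (u * x) <= g (mp * x)) by (apply ratio_mono; unfold mm, mp in *; nra).
  assert (Q1 : g (mm * x) / g x <= g (u * x) / g x).
  { unfold Rdiv; apply Rmult_le_compat_r; [left; apply Rinv_0_lt_compat; lra|lra]. }
  assert (Q2 : g (u * x) / g x <= g (mp * x) / g x).
  { unfold Rdiv; apply Rmult_le_compat_r; [left; apply Rinv_0_lt_compat; lra|lra]. }
  apply Rabs_def2 in Rp, Rm, Cp, Cm. apply Rabs_def1; lra.
Qed.

Lemma d_to0 : forall eps, 0 < eps -> exists del, 0 < del /\ forall x, 0 < x < del -> d x < eps.
Proof.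
  intros eps He.
  destruct (d_over_ratio_limit 1 ltac:(lra)) as [d1 [Hd1 D1]].
  destruct (ratio_to0 (eps / (a + 2))) as [d2 [Hd2 D2]]; [apply Rdiv_lt_0_compat; lra|].
  exists (Rmin (Rmin d1 d2) 1). split; [apply Rmin_pos; [apply Rmin_pos|]; lra|].
  intros x [Hx0 Hxd].
  assert (x < d1) by (eapply Rlt_le_trans; [exact Hxd|eapply Rle_trans; [apply Rmin_l|apply Rmin_l]]).
  assert (x < d2) by (eapply Rlt_le_trans; [exact Hxd|eapply Rle_trans; [apply Rmin_l|apply Rmin_r]]).
  assert (x < 1) by (eapply Rlt_le_trans; [exact Hxd|apply Rmin_r]).
  specialize (D1 x (conj Hx0 H)). specialize (D2 x (conj Hx0 H0)).
  pose proof (ratio_pos x ltac:(lra)) as Hg.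
  apply Rabs_def2 in D1. destruct D1 as [D1 _].
  replace (d x) with (d x / g x * g x) by (field; lra).
  apply Rle_lt_trans with ((a + 2) * g x); [apply Rmult_le_compat_r; lra|].
  apply Rmult_lt_reg_l with (/ (a + 2)); [apply Rinv_0_lt_compat; lra|].
  rewrite <- Rmult_assoc, Rinv_l, Rmult_1_l by lra. unfold Rdiv in D2. lra.
Qed.

Lemma Fshift_pos x : 0 < x <= 1 -> 0 < Fshift h x.
Proof. intros. pose proof (h_pos x H). unfold Fshift; lra. Qed.

Lemma Fshift_lim : lim0 (Fshift h) 1.
Proof.
  intros eps He. destruct (ratio_to0 1 ltac:(lra)) as [d0 [Hd0 Hg]].
  exists (Rmin d0 (Rmin 1 (eps / 2))). split; [apply Rmin_pos; [lra|apply Rmin_pos; lra]|].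
  intros x [Hx0 Hxd].
  assert (x < d0) by (eapply Rlt_le_trans; [exact Hxd|apply Rmin_l]).
  assert (x < 1) by (eapply Rlt_le_trans; [exact Hxd|eapply Rle_trans; [apply Rmin_r|apply Rmin_l]]).
  assert (x < eps / 2) by (eapply Rlt_le_trans; [exact Hxd|eapply Rle_trans; [apply Rmin_r|apply Rmin_r]]).
  specialize (Hg x (conj Hx0 H)). pose proof (ratio_pos x ltac:(lra)).
  unfold Fshift. rewrite (h_as_ratio h x) by lra.
  replace (1 - x + x * g x - 1) with (x * (g x - 1)) by ring.
  rewrite Rabs_mult, Rabs_right by lra. rewrite Rabs_left1 by lra. nra.
Qed.

Lemma psi_strict x y : 0 < x < y -> y <= 1 -> psi h x < psi h y.
Proof.
  intros Hx Hy. unfold psi.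
  pose proof (h_pos x ltac:(lra)). pose proof (h_pos y ltac:(lra)).
  pose proof (h_mono x y ltac:(lra) Hy).
  pose proof (Fshift_pos x ltac:(lra)). pose proof (Fshift_pos y ltac:(lra)).
  unfold Fshift in *. apply Rmult_lt_reg_r with ((1 - x + h x) * (1 - y + h y)); [nra|].
  replace (h x / (1 - x + h x) * ((1 - x + h x) * (1 - y + h y)))
    with (h x * (1 - y + h y)) by (field; lra).
  replace (h y / (1 - y + h y) * ((1 - x + h x) * (1 - y + h y)))
    with (h y * (1 - x + h x)) by (field; lra).
  nra.
Qed.

Lemma psi_mono x y : 0 < x <= y -> y <= 1 -> psi h x <= psi h y.
Proof. intros Hx Hy. destruct (Req_dec x y) as [->|]; [lra|]. left; apply psi_strict; auto; lra. Qed.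

Lemma psi_regular_variation mu : 0 < mu ->
  lim0 (fun x => psi h (mu * x) / psi h x) (Rpower mu (a + 1)).
Proof.
  intros Hm.
  apply lim0_ext with (del0 := Rmin 1 (/ mu))
    (g := fun x => (mu * (g (mu * x) / g x)) * (Fshift h x * / Fshift h (mu * x))).
  - apply Rmin_pos; [lra|apply Rinv_0_lt_compat; lra].
  - intros x [Hx0 Hxd].
    assert (x < 1) by (eapply Rlt_le_trans; [exact Hxd|apply Rmin_l]).
    assert (x < / mu) by (eapply Rlt_le_trans; [exact Hxd|apply Rmin_r]).
    assert (mu * x < 1)
      by (apply Rmult_lt_compat_l with (r := mu) in H0; auto; rewrite Rinv_r in H0; lra).
    assert (0 < mu * x) by nra.
    pose proof (Fshift_pos x ltac:(lra)). pose proof (Fshift_pos (mu * x) ltac:(lra)).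
    pose proof (ratio_pos x ltac:(lra)). pose proof (ratio_pos (mu * x) ltac:(lra)).
    unfold psi. rewrite (h_as_ratio h x), (h_as_ratio h (mu * x)) by lra. field. repeat split; lra.
  - rewrite Rpow_S by lra. replace (mu * Rpower mu a) with ((mu * Rpower mu a) * (1 * / 1)) by field.
    apply lim0_mult.
    + apply lim0_mult; [apply lim0_const|]. intros eps He.
      destruct (ratio_regular_variation mu Hm eps He) as [del [Hdel H]]. exists del; auto.
    + apply lim0_mult; [apply Fshift_lim|]. apply lim0_inv; [|lra].
      apply lim0_scale; auto. apply Fshift_lim.
Qed.

Lemma psi_scale_bracket lam e : 0 < lam -> 0 < e <= Rpower lam (/ (a + 1)) / 2 ->
  exists del, 0 < del /\ forall x, 0 < x < del ->
    (Rpower lam (/ (a + 1)) + e) * x < 1 /\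
    psi h ((Rpower lam (/ (a + 1)) - e) * x) < lam * psi h x < psi h ((Rpower lam (/ (a + 1)) + e) * x).
Proof.
  intros Hl He. set (A := a + 1) in *. set (c := Rpower lam (/ A)) in *.
  assert (Hc : 0 < c) by apply Rpow_pos, Hl.
  assert (HcA : Rpower c A = lam).
  { unfold c. rewrite Rpower_mult. replace (/ A * A) with 1 by (unfold A; field; lra).
    apply Rpower_1; auto. }
  set (mp := c + e). set (mm := c - e).
  assert (Hmp : lam < Rpower mp A) by (rewrite <- HcA; apply Rlt_Rpower_l; unfold A, mp; lra).
  assert (Hmm : Rpower mm A < lam) by (rewrite <- HcA; apply Rlt_Rpower_l; unfold A, mm; lra).
  destruct (psi_regular_variation mp ltac:(unfold mp; lra) (Rpower mp A - lam) ltac:(lra)) as [d1 [Hd1 P1]].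
  destruct (psi_regular_variation mm ltac:(unfold mm; lra) (lam - Rpower mm A) ltac:(lra)) as [d2 [Hd2 P2]].
  exists (Rmin (Rmin d1 d2) (Rmin (/ mp) 1)). split.
  { repeat apply Rmin_pos; auto; [apply Rinv_0_lt_compat; unfold mp; lra|lra]. }
  intros x [Hx Hxd].
  assert (x < d1) by (eapply Rlt_le_trans; [exact Hxd|eapply Rle_trans; [apply Rmin_l|apply Rmin_l]]).
  assert (x < d2) by (eapply Rlt_le_trans; [exact Hxd|eapply Rle_trans; [apply Rmin_l|apply Rmin_r]]).
  assert (x < / mp) by (eapply Rlt_le_trans; [exact Hxd|eapply Rle_trans; [apply Rmin_r|apply Rmin_l]]).
  assert (x < 1) by (eapply Rlt_le_trans; [exact Hxd|eapply Rle_trans; [apply Rmin_r|apply Rmin_r]]).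
  assert (Hmpx : mp * x < 1) by (apply Rmult_lt_compat_l with (r := mp) in H1;
    [|unfold mp; lra]; rewrite Rinv_r in H1; unfold mp in *; lra).
  specialize (P1 x (conj Hx H)). specialize (P2 x (conj Hx H0)).
  apply Rabs_def2 in P1, P2. fold A in P1, P2.
  assert (Hpx : 0 < psi h x) by (unfold psi; apply Rdiv_lt_0_compat; [apply h_pos|apply Fshift_pos]; lra).
  split; [exact Hmpx|split].
  - apply Rmult_lt_reg_r with (/ psi h x); [apply Rinv_0_lt_compat; lra|].
    rewrite Rmult_assoc, Rinv_r, Rmult_1_r by lra. unfold Rdiv in P2. lra.
  - apply Rmult_lt_reg_r with (/ psi h x); [apply Rinv_0_lt_compat; lra|].
    rewrite Rmult_assoc, Rinv_r, Rmult_1_r by lra. unfold Rdiv in P1. lra.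
Qed.

Lemma psi_inverse_between x' u v : 0 < u <= v -> v <= 1 -> 0 < x' <= 1 ->
  psi h u < psi h x' < psi h v -> u < x' < v.
Proof.
  intros Huv Hv Hx' [Hu Hv']. split.
  - destruct (Rlt_le_dec u x') as [|Hge]; auto. pose proof (psi_mono x' u ltac:(lra) ltac:(lra)). lra.
  - destruct (Rlt_le_dec x' v) as [|Hge]; auto. pose proof (psi_mono v x' ltac:(lra) ltac:(lra)). lra.
Qed.

Section PsiInverse.

Context (xf : R -> R) (Hxf : forall y, 0 < y < 1 -> 0 < xf y <= 1 /\ psi h (xf y) = y).

Lemma xf_to0 : forall e, 0 < e -> exists del, 0 < del /\ forall y, 0 < y < del -> xf y < e.
Proof.
  intros e He. set (e' := Rmin e 1).
  assert (He' : 0 < e' <= 1) by (split; [apply Rmin_pos; lra|apply Rmin_r]).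
  assert (Hp : 0 < psi h e').
  { unfold psi. apply Rdiv_lt_0_compat; [apply h_pos|apply Fshift_pos]; auto. }
  exists (Rmin (psi h e') 1). split; [apply Rmin_pos; lra|]. intros y [Hy0 Hyd].
  assert (y < psi h e') by (eapply Rlt_le_trans; [exact Hyd|apply Rmin_l]).
  assert (y < 1) by (eapply Rlt_le_trans; [exact Hyd|apply Rmin_r]).
  destruct (Hxf y (conj Hy0 H0)) as [Hx Hpsi].
  destruct (Rlt_le_dec (xf y) e') as [|Hge].
  - assert (e' <= e) by apply Rmin_l. lra.
  - pose proof (psi_mono e' (xf y) ltac:(lra) ltac:(lra)). lra.
Qed.

Lemma xf_scale_to0 lam : 0 < lam ->
  forall e, 0 < e -> exists del, 0 < del /\ forall y, 0 < y < del -> xf (lam * y) < e.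
Proof.
  intros Hl e He. destruct (xf_to0 e He) as [d0 [Hd0 H]].
  exists (d0 / lam). split; [apply Rdiv_lt_0_compat; auto|]. intros y [Hy0 Hyd]. apply H. split; [nra|].
  apply Rmult_lt_compat_l with (r := lam) in Hyd; auto.
  replace (lam * (d0 / lam)) with d0 in Hyd by (field; lra). auto.
Qed.

Lemma xf_regular_variation lam : 0 < lam -> forall eps, 0 < eps ->
  exists del, 0 < del /\ forall y, 0 < y < del ->
    Rabs (xf (lam * y) / xf y - Rpower lam (/ (a + 1))) < eps.
Proof.
  intros Hl eps He. set (c := Rpower lam (/ (a + 1))).
  assert (Hc : 0 < c) by apply Rpow_pos, Hl.
  set (e := Rmin (eps / 2) (c / 2)).
  assert (He1 : 0 < e <= c / 2) by (split; [apply Rmin_pos; lra|apply Rmin_r]).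
  assert (He2 : e <= eps / 2) by apply Rmin_l.
  destruct (psi_scale_bracket lam e Hl He1) as [dx [Hdx B]]. fold c in B.
  destruct (xf_to0 dx Hdx) as [d3 [Hd3 X3]].
  exists (Rmin d3 (Rmin (/ lam) 1)). split.
  { apply Rmin_pos; auto. apply Rmin_pos; [apply Rinv_0_lt_compat; auto|lra]. }
  intros y [Hy0 Hyd].
  assert (y < d3) by (eapply Rlt_le_trans; [exact Hyd|apply Rmin_l]).
  assert (y < / lam) by (eapply Rlt_le_trans; [exact Hyd|eapply Rle_trans; [apply Rmin_r|apply Rmin_l]]).
  assert (y < 1) by (eapply Rlt_le_trans; [exact Hyd|eapply Rle_trans; [apply Rmin_r|apply Rmin_r]]).
  assert (Hly : lam * y < 1)
    by (apply Rmult_lt_compat_l with (r := lam) in H0; auto; rewrite Rinv_r in H0; lra).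
  destruct (Hxf y (conj Hy0 H1)) as [Hx Hpx].
  destruct (Hxf (lam * y) (conj (Rmult_lt_0_compat _ _ Hl Hy0) Hly)) as [Hx' Hpx'].
  set (x := xf y) in *. set (x' := xf (lam * y)) in *.
  destruct (B x (conj (proj1 Hx) (X3 y (conj Hy0 H)))) as [Hmpx [Q2 Q1]].
  rewrite Hpx, <- Hpx' in Q1, Q2.
  destruct (psi_inverse_between x' ((c - e) * x) ((c + e) * x)) as [Lo Up];
    [split; [apply Rmult_lt_0_compat|apply Rmult_le_compat_r]; lra|lra|exact Hx'|lra|].
  assert (x' / x < c + e) by (apply Rmult_lt_reg_r with x; [lra|];
    unfold Rdiv; rewrite Rmult_assoc, Rinv_l; lra).
  assert (c - e < x' / x) by (apply Rmult_lt_reg_r with x; [lra|];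
    unfold Rdiv; rewrite Rmult_assoc, Rinv_l; lra).
  apply Rabs_def1; lra.
Qed.

(** [d(xf(lam y)) / d(xf y) -> lam^(a/(a+1))], combining [d ~ (a+1) g],
    the regular variation of [g] and that of [xf]. *)
Lemma d_xf_ratio lam : 0 < lam ->
  lim0 (fun y => d (xf (lam * y)) / d (xf y)) (Rpower (Rpower lam (/ (a + 1))) a).
Proof.
  intros Hl. set (c := Rpower lam (/ (a + 1))). assert (Hc : 0 < c) by apply Rpow_pos, Hl.
  assert (Hpos : forall y, 0 < y < Rmin 1 (/ lam) -> 0 < xf y <= 1 /\ 0 < xf (lam * y) <= 1).
  { intros y [Hy0 Hyd]. assert (y < 1) by (eapply Rlt_le_trans; [exact Hyd|apply Rmin_l]).
    assert (y < / lam) by (eapply Rlt_le_trans; [exact Hyd|apply Rmin_r]).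
    assert (lam * y < 1)
      by (apply Rmult_lt_compat_l with (r := lam) in H0; auto; rewrite Rinv_r in H0; lra).
    split; apply Hxf; split; try lra. apply Rmult_lt_0_compat; lra. }
  apply lim0_ext with (del0 := Rmin 1 (/ lam))
    (g := fun y => (d (xf (lam * y)) / g (xf (lam * y))) * (g (xf (lam * y)) / g (xf y))
                   * / (d (xf y) / g (xf y))).
  { apply Rmin_pos; [lra|apply Rinv_0_lt_compat; auto]. }
  { intros y Hy. destruct (Hpos y Hy) as [HA1 HB1].
    pose proof (ratio_pos _ HA1). pose proof (ratio_pos _ HB1).
    pose proof (d_pos _ HA1). pose proof (d_pos _ HB1).
    field. repeat split; lra. }
  replace (Rpower c a) with ((a + 1) * Rpower c a * / (a + 1)) by (field; lra).
  apply lim0_mult; [apply lim0_mult|apply lim0_inv; [|lra]].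
  - apply (lim0_comp (fun x => d x / g x) (a + 1) (fun y => xf (lam * y)) (/ lam));
      [apply d_over_ratio_limit|apply Rinv_0_lt_compat; auto| |apply xf_scale_to0; auto].
    intros y [Hy0 Hyd]. apply Hxf. split; [apply Rmult_lt_0_compat; auto|].
    apply Rmult_lt_compat_l with (r := lam) in Hyd; auto. rewrite Rinv_r in Hyd; lra.
  - intros eps He. destruct (ratio_uniform c Hc eps He) as [dl [et [Hdl [Het U]]]].
    destruct (xf_regular_variation lam Hl et Het) as [d1 [Hd1 I1]].
    destruct (xf_to0 dl Hdl) as [d2 [Hd2 I2]].
    exists (Rmin (Rmin d1 d2) (Rmin 1 (/ lam))). split.
    { apply Rmin_pos; [apply Rmin_pos; auto|apply Rmin_pos; [lra|apply Rinv_0_lt_compat; auto]]. }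
    intros y [Hy0 Hyd].
    assert (y < d1) by (eapply Rlt_le_trans; [exact Hyd|eapply Rle_trans; [apply Rmin_l|apply Rmin_l]]).
    assert (y < d2) by (eapply Rlt_le_trans; [exact Hyd|eapply Rle_trans; [apply Rmin_l|apply Rmin_r]]).
    assert (Hy' : 0 < y < Rmin 1 (/ lam)) by (split; auto; eapply Rlt_le_trans; [exact Hyd|apply Rmin_r]).
    destruct (Hpos y Hy') as [[A1 A2] [B1 B2]].
    specialize (I1 y (conj Hy0 H)). specialize (I2 y (conj Hy0 H0)).
    specialize (U (xf y) (xf (lam * y) / xf y) (conj A1 I2) I1).
    replace (xf (lam * y) / xf y * xf y) with (xf (lam * y)) in U by (field; lra). exact U.
  - apply (lim0_comp (fun x => d x / g x) (a + 1) xf 1); [apply d_over_ratio_limit|lra| |apply xf_to0].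
    intros y Hy. apply Hxf; auto.
Qed.

Lemma d_xf_slowly_varying (L2 : R -> R) :
  (forall y, 0 < y < 1 -> L2 y = d (xf y) / Rpower y (a / (a + 1))) -> slowly_varying_0 L2.
Proof.
  intros HL lam Hl. set (gam := a / (a + 1)).
  assert (Hca : Rpower (Rpower lam (/ (a + 1))) a = Rpower lam gam).
  { rewrite Rpower_mult. unfold gam. f_equal. field. lra. }
  assert (Hpl := Rpow_pos lam gam Hl).
  change (lim0 (fun x => L2 (lam * x) / L2 x) 1).
  apply lim0_ext with (del0 := Rmin 1 (/ lam))
    (g := fun y => d (xf (lam * y)) / d (xf y) * / Rpower lam gam).
  { apply Rmin_pos; [lra|apply Rinv_0_lt_compat; auto]. }
  { intros y [Hy0 Hyd]. assert (y < 1) by (eapply Rlt_le_trans; [exact Hyd|apply Rmin_l]).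
    assert (y < / lam) by (eapply Rlt_le_trans; [exact Hyd|apply Rmin_r]).
    assert (lam * y < 1)
      by (apply Rmult_lt_compat_l with (r := lam) in H0; auto; rewrite Rinv_r in H0; lra).
    assert (0 < lam * y) by (apply Rmult_lt_0_compat; auto).
    rewrite !HL by lra. fold gam.
    destruct (Hxf y ltac:(lra)) as [HA1 _]. destruct (Hxf (lam * y) ltac:(lra)) as [HB1 _].
    pose proof (d_pos _ HA1). pose proof (d_pos _ HB1).
    rewrite Rpow_mul by lra. pose proof (Rpow_pos y gam Hy0). field. repeat split; lra. }
  replace 1 with (Rpower lam gam * / Rpower lam gam) by (field; lra).
  apply lim0_mult; [|apply lim0_const]. rewrite <- Hca. apply d_xf_ratio; auto.
Qed.

End PsiInverse.

Section Recursion.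

Context (h_below : forall x, 0 < x <= 1 -> h x < x)
        (q : nat -> R) (q_init : q 0%nat = 1) (q_step : forall n, q (S n) = q n - h (q n)).

Lemma q_range n : 0 < q n <= 1 /\ q (S n) <= q n.
Proof.
  induction n as [|n [IH1 IH2]].
  - rewrite q_step, q_init. pose proof (h_below 1 ltac:(lra)). pose proof (h_pos 1 ltac:(lra)). lra.
  - assert (0 < q (S n) <= 1).
    { rewrite q_step. pose proof (h_below (q n) IH1). pose proof (h_pos (q n) IH1). lra. }
    split; auto. rewrite (q_step (S n)). pose proof (h_pos (q (S n)) H). lra.
Qed.

(** [q_n -> 0]: otherwise each step would decrease [q] by at least [h(e) > 0]. *)
Lemma q_to0 : forall e, 0 < e -> exists N, forall n, (N <= n)%nat -> q n < e.
Proof.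
  intros e He.
  assert (Hdec : forall m n, (m <= n)%nat -> q n <= q m).
  { intros m n Hmn. induction Hmn; [lra|]. pose proof (q_range m0). lra. }
  set (e' := Rmin e 1). assert (He' : 0 < e' <= 1) by (split; [apply Rmin_pos; lra|apply Rmin_r]).
  assert (He'e : e' <= e) by apply Rmin_l.
  destruct (classic (exists N, q N < e')) as [[N HN]|Hn].
  - exists N. intros n Hn. pose proof (Hdec N n Hn). lra.
  - exfalso. assert (Hall : forall n, e' <= q n).
    { intros n. destruct (Rle_lt_dec e' (q n)); auto. exfalso; apply Hn; eauto. }
    assert (Hc : 0 < h e') by (apply h_pos; lra).
    assert (Hlin : forall n, q n <= 1 - INR n * h e').
    { induction n; [rewrite q_init; simpl; lra|].
      rewrite q_step, S_INR. pose proof (q_range n). pose proof (Hall n).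
      pose proof (h_mono e' (q n) ltac:(lra) ltac:(lra)). lra. }
    destruct (archimed_cor1 (h e') Hc) as [N [HN HN0]].
    specialize (Hlin N). specialize (Hall N).
    assert (0 < INR N) by (apply lt_0_INR; auto).
    assert (1 < INR N * h e').
    { apply Rmult_lt_compat_l with (r := INR N) in HN; auto. rewrite Rinv_r in HN; lra. }
    lra.
Qed.

Notation t n := (g (q n)).

Lemma q_ratio_pos n : 0 < t n.
Proof. apply ratio_pos, q_range. Qed.

Lemma q_step_ratio n : q (S n) = (1 - t n) * q n.
Proof. rewrite q_step, (h_as_ratio h (q n)) by apply q_range. ring. Qed.

(** Convexity brackets the increments of [1/g] along the recursion. *)
Lemma inv_ratio_increment_bounds n :
  d (q (S n)) / t (S n) - 1 <= / t (S n) - / t n <= (d (q n) / t n) * / (t (S n) / t n) - 1.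
Proof.
  destruct (q_range n) as [[Rx0 Rx1] Ryx]. destruct (q_range (S n)) as [[Ry0 Ry1] _].
  assert (Ex : h (q n) = q n * t n) by (apply h_as_ratio; lra).
  assert (Ey : h (q (S n)) = q (S n) * t (S n)) by (apply h_as_ratio; lra).
  assert (Exy : q n - q (S n) = q n * t n) by (rewrite q_step, Ex; ring).
  pose proof (q_ratio_pos n) as Htx. pose proof (q_ratio_pos (S n)) as Hty.
  pose proof (incr_upper (q (S n)) (q n) ltac:(lra) Rx1 Rx0) as H2.
  pose proof (incr_lower (q (S n)) (q n) ltac:(lra) Rx1) as H3.
  set (x := q n) in *. set (y := q (S n)) in *. set (tx := g x) in *. set (ty := g y) in *.
  rewrite Exy, Ex, Ey in H2, H3.
  split.
  - apply Rmult_le_reg_r with (tx * ty); [nra|].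
    replace ((d y / ty - 1) * (tx * ty)) with (tx * d y - tx * ty) by (field; lra).
    replace ((/ ty - / tx) * (tx * ty)) with (tx - ty) by (field; lra).
    assert (x * tx * d y <= x * (tx - ty) + x * tx * ty) by nra.
    assert (tx * d y <= (tx - ty) + tx * ty); [|lra].
    apply Rmult_le_reg_l with x; [lra|]. nra.
  - apply Rmult_le_reg_r with (tx * ty); [nra|].
    replace ((d x / tx * / (ty / tx) - 1) * (tx * ty)) with (tx * d x - tx * ty) by (field; lra).
    replace ((/ ty - / tx) * (tx * ty)) with (tx - ty) by (field; lra).
    assert (x * (tx - ty) + x * tx * ty <= x * tx * d x) by nra.
    assert ((tx - ty) + tx * ty <= tx * d x); [|lra].
    apply Rmult_le_reg_l with x; [lra|]. nra.
Qed.

(** Both brackets tend to [a], since [d ~ (a+1) g] and [g(q_(n+1))/g(q_n) -> 1]. *)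
Lemma inv_ratio_increment_limit : Un_cv (fun n => / t (S n) - / t n) a.
Proof.
  assert (DG : Un_cv (fun n => d (q n) / t n) (a + 1)).
  { apply (cv_comp0 (fun x => d x / g x)); [apply d_over_ratio_limit|intros; apply q_range|exact q_to0]. }
  assert (T0 : Un_cv (fun n => t n) 0).
  { intros eps He. destruct (ratio_to0 eps He) as [dl [Hdl G]]. destruct (q_to0 dl Hdl) as [N HN].
    exists N. intros n Hn. unfold Rdist. rewrite Rminus_0_r, Rabs_right by (left; apply q_ratio_pos).
    apply G. split; [apply q_range|auto]. }
  assert (RAT : Un_cv (fun n => t (S n) / t n) 1).
  { intros eps He. destruct (ratio_uniform 1 ltac:(lra) eps He) as [dl [et [Hdl [Het U]]]].
    destruct (q_to0 dl Hdl) as [N1 HN1]. destruct (T0 et Het) as [N2 HN2].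
    exists (max N1 N2). intros n Hn. specialize (HN1 n ltac:(lia)). specialize (HN2 n ltac:(lia)).
    unfold Rdist in *. rewrite Rminus_0_r in HN2. rewrite Rpow_1 in U.
    rewrite q_step_ratio. apply U; [split; [apply q_range|auto]|].
    replace (1 - t n - 1) with (- t n) by ring. rewrite Rabs_Ropp; auto. }
  apply cv_squeeze with (l := fun n => d (q (S n)) / t (S n) - 1)
                        (u := fun n => (d (q n) / t n) * / (t (S n) / t n) - 1);
    [| |exact inv_ratio_increment_bounds].
  - replace a with ((a + 1) - 1) by ring. apply CV_minus; [|apply cv_const].
    apply (cv_shift (fun n => d (q n) / t n)). auto.
  - replace a with ((a + 1) * / 1 - 1) by field. apply CV_minus; [|apply cv_const].
    apply CV_mult; [exact DG|apply cv_inv; [exact RAT|lra]].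
Qed.

(** By Cesaro, [n g(q_n) -> 1/a]. *)
Lemma ratio_along_q : Un_cv (fun n => INR (S n) * t n) (/ a).
Proof.
  assert (TEL : forall m, sum_f_R0 (fun k => / t (S k) - / t k) m = / t (S m) - / t 0%nat).
  { induction m; simpl; [ring|]. rewrite IHm; ring. }
  pose proof (Cesaro_1 _ _ inv_ratio_increment_limit) as CES.
  assert (C2 : Un_cv (fun n => / t n / INR n) a).
  { assert (C3 : Un_cv (fun n => sum_f_R0 (fun k => / t (S k) - / t k) (pred n) / INR n
                                  + / t 0%nat * / INR n) (a + / t 0%nat * 0)).
    { apply CV_plus; auto. apply CV_mult; [apply cv_const|apply cv_inv_INR]. }
    rewrite Rmult_0_r, Rplus_0_r in C3. apply (cv_ext _ _ _ 1%nat C3).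
    intros n Hn. destruct n as [|m]; [lia|]. simpl pred. rewrite TEL.
    assert (0 < INR (S m)) by (apply lt_0_INR; lia).
    pose proof (q_ratio_pos (S m)); pose proof (q_ratio_pos 0%nat). field; repeat split; lra. }
  assert (C4 : Un_cv (fun n => INR n * t n) (/ a)).
  { apply cv_inv in C2; [|lra]. apply (cv_ext _ _ _ 1%nat C2).
    intros n Hn. assert (0 < INR n) by (apply lt_0_INR; lia). pose proof (q_ratio_pos n). field; lra. }
  replace (/ a) with (/ a + 0) by ring.
  apply cv_ext with (u := fun n => INR n * t n + t n) (N := O).
  - apply CV_plus; auto. intros eps He. destruct (ratio_to0 eps He) as [dl [Hdl G]].
    destruct (q_to0 dl Hdl) as [N HN]. exists N. intros n Hn. unfold Rdist.
    rewrite Rminus_0_r, Rabs_right by (left; apply q_ratio_pos). apply G. split; [apply q_range|auto].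
  - intros n _. rewrite S_INR; ring.
Qed.

Lemma d_along_q : Un_cv (fun n => d (q n) * INR (S n)) ((a + 1) / a).
Proof.
  apply cv_ext with (u := fun n => (d (q n) / t n) * (INR (S n) * t n)) (N := O).
  - unfold Rdiv at 2. apply CV_mult; [|exact ratio_along_q].
    apply (cv_comp0 (fun x => d x / g x)); [apply d_over_ratio_limit|intros; apply q_range|exact q_to0].
  - intros n _. pose proof (q_ratio_pos n). field; lra.
Qed.

End Recursion.

End TailAnalysis.

(** ** From the offspring distribution to the tail model *)

Section OffspringTail.

Context (p : nat -> R) (Hod : offspring_distribution p)
  (F : R -> R) (HF : forall x, 0 <= x <= 1 -> infinite_sum (fun k => p k * x ^ k) (F x))
  (a : R) (l1 h : R -> R) (HFh : forall x, F (1 - x) = 1 - x + h x).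

Let Hp : forall n, 0 <= p n := proj1 Hod.

Definition dtail (x : R) : R := 1 - deriv_series p (1 - x).

(** The convexity bounds of F are the increment bounds of the tail model. *)
Lemma tail_model_of_gf : 0 < a -> slowly_varying_0 l1 -> h 0 = 0 ->
  (forall x, 0 < x <= 1 -> h x = Rpower x (a + 1) * l1 x) -> tail_model a l1 h dtail.
Proof.
  intros Ha Hsv H0 Hpow. constructor; auto.
  - intros x y Hxy Hy1 Hy0.
    destruct (convexity_bounds p F (1 - y) (1 - x) Hod HF ltac:(lra) ltac:(lra)) as [L _].
    specialize (L ltac:(lra)). rewrite !HFh in L. unfold dtail.
    replace (1 - x - (1 - y)) with (y - x) in L by ring. nra.
  - intros x y Hxy Hy1.
    destruct (convexity_bounds p F (1 - y) (1 - x) Hod HF ltac:(lra) ltac:(lra)) as [_ U].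
    specialize (U ltac:(lra)). rewrite !HFh in U. unfold dtail.
    replace (1 - x - (1 - y)) with (y - x) in U by ring. nra.
Qed.

Context (HA : tail_model a l1 h dtail).

Lemma size_gf_tail i : exists l2 : R -> R, slowly_varying_0 l2 /\
  forall z, 0 < z < 1 -> A_size_gf p i z = 1 - rpow (1 - z) (a / (a + 1)) * l2 (1 - z).
Proof.
  assert (Hxz : forall y, exists x, 0 < y < 1 ->
            0 < x <= 1 /\ psi h x = y /\ A_size_gf p i (1 - y) = 1 - dtail x).
  { intros y. destruct (classic (0 < y < 1)) as [Hy|Hy]; [|exists 0; tauto].
    destruct (size_gf_identity p Hod F HF i (1 - y) ltac:(lra)) as [X [HX0 [HXe HXA]]].
    exists (1 - X). intros _.
    assert (Hx : 0 < 1 - X <= 1) by lra.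
    split; [exact Hx|split].
    - pose proof (Fshift_pos HA (1 - X) Hx) as Hk.
      assert (Ek : Fshift h (1 - X) = F X) by (unfold Fshift; rewrite <- HFh; f_equal; ring).
      unfold psi. rewrite Ek in *.
      assert (Eh : h (1 - X) = F X - X) by (rewrite <- Ek; unfold Fshift; ring).
      assert (E2 : F X - X = y * F X) by (rewrite HXe at 2; ring).
      rewrite Eh, E2. field. lra.
    - rewrite (HXA _ (deriv_series_spec p X Hod ltac:(lra))). unfold dtail.
      replace (1 - (1 - X)) with X by ring. ring. }
  destruct (choice _ Hxz) as [xf Hxf].
  exists (fun y => (1 - A_size_gf p i (1 - y)) / rpow y (a / (a + 1))). split.
  - apply (d_xf_slowly_varying HA xf); [intros y Hy; destruct (Hxf y Hy) as [? [? _]]; auto|].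
    intros y Hy. destruct (Hxf y Hy) as [_ [_ E]].
    rewrite E. unfold rpow. destruct (Rle_dec y 0); [lra|]. f_equal; ring.
  - intros z Hz. replace (1 - (1 - z)) with z by ring. unfold rpow.
    destruct (Rle_dec (1 - z) 0); [lra|].
    pose proof (Rpow_pos (1 - z) (a / (a + 1)) ltac:(lra)). field. lra.
Qed.

Lemma deriv_series_le1 w : 0 <= w < 1 -> deriv_series p w <= 1.
Proof.
  intros Hw. pose proof (d_pos HA (1 - w) ltac:(lra)). unfold dtail in H.
  replace (1 - (1 - w)) with w in H by ring. lra.
Qed.

(** Criticality: F'(1) = 1, as [F'(w) <= 1] for [w < 1] and [F'(1 - x) -> 1]. *)
Lemma deriv_at_one : infinite_sum (fun m => dcoef p m * 1 ^ m) 1.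
Proof.
  assert (Hc : forall m, 0 <= dcoef p m) by (intros; apply dcoef_nonneg; auto).
  apply isum_of_sup.
  - intros m; rewrite pow1, Rmult_1_r; auto.
  - intros N. destruct (Rle_lt_dec (psum (fun m => dcoef p m * 1 ^ m) N) 1) as [|Hgt]; auto.
    exfalso. set (P := psum (fun m => dcoef p m * 1 ^ m) N) in *.
    set (K := psum (fun m => dcoef p m * INR m) N).
    assert (K0 : 0 <= K) by (apply psum_nonneg; intros; apply Rmult_le_pos; auto; apply pos_INR).
    set (del := Rmin (1 / 2) ((P - 1) / (2 * (K + 1)))).
    assert (Hdel : 0 < del <= 1 / 2)
      by (split; [apply Rmin_pos; [lra|apply Rdiv_lt_0_compat; lra]|apply Rmin_l]).
    assert (Hdel2 : del <= (P - 1) / (2 * (K + 1))) by apply Rmin_r.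
    assert (Pw : psum (fun m => dcoef p m * (1 - del) ^ m) N <= 1).
    { eapply Rle_trans; [|apply (deriv_series_le1 (1 - del) ltac:(lra))].
      apply isum_le; [intros; apply deriv_series_terms_nonneg; auto; lra|].
      apply deriv_series_spec; auto; lra. }
    pose proof (psum_pow_lipschitz (dcoef p) N (1 - del) 1 Hc ltac:(lra) ltac:(lra)). fold P K in H.
    assert (K * del <= (P - 1) / 2).
    { apply Rle_trans with (K * ((P - 1) / (2 * (K + 1)))); [apply Rmult_le_compat_l; lra|].
      replace (K * ((P - 1) / (2 * (K + 1)))) with (K * ((P - 1) / 2 / (K + 1))) by (field; lra).
      apply small_mult; lra. }
    replace (1 - (1 - del)) with del in H by ring. lra.
  - intros eps He. destruct (d_to0 HA (eps / 2) ltac:(lra)) as [dl [Hdl Dt]].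
    set (x := Rmin (dl / 2) (1 / 2)).
    assert (Hx : 0 < x < dl)
      by (split; [apply Rmin_pos; lra|unfold x; eapply Rle_lt_trans; [apply Rmin_l|lra]]).
    assert (Hx1 : x <= 1 / 2) by apply Rmin_r.
    specialize (Dt x Hx). unfold dtail in Dt.
    destruct (isum_approx _ _ (eps / 2) (deriv_series_spec p (1 - x) Hod ltac:(lra)) ltac:(lra))
      as [N HN].
    exists N. specialize (HN N (le_n _)).
    assert (psum (fun m => dcoef p m * (1 - x) ^ m) N <= psum (fun m => dcoef p m * 1 ^ m) N).
    { apply psum_le. intros m _. apply Rmult_le_compat_l; auto. apply pow_incr; lra. }
    lra.
Qed.

(** The Galton-Watson tree is finite almost surely: the total mass is a
    fixed point of F, and F has no fixed point in [0,1) since h > 0. *)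
Lemma gw_total_one : nnsum (gw_weight p) = 1.
Proof.
  pose proof (gw_total_fixed_point p Hod F HF) as E.
  destruct (dominated_tree_sum p Hod _ (gw_bounds p Hod)) as [_ HS1].
  destruct (Req_dec (nnsum (gw_weight p)) 1) as [|Hne]; auto. exfalso.
  pose proof (h_pos HA (1 - nnsum (gw_weight p)) ltac:(lra)).
  pose proof (HFh (1 - nnsum (gw_weight p))).
  replace (1 - (1 - nnsum (gw_weight p))) with (nnsum (gw_weight p)) in H0 by ring. lra.
Qed.

(** Some [p(m+1) > 0], since otherwise [F'] would vanish on [[0,1)]. *)
Lemma offspring_nontrivial : exists m0, 0 < p (S m0).
Proof.
  apply not_all_not_ex. intros Hn.
  assert (Hz : forall m, p (S m) = 0) by (intros m; specialize (Hn m); specialize (Hp (S m)); lra).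
  assert (Hd : forall x, 0 <= x < 1 -> deriv_series p x = 0).
  { intros x Hx. apply (isum_unique (fun m => dcoef p m * x ^ m)); [apply deriv_series_spec; auto|].
    apply isum_of_sup; [intros; unfold dcoef; rewrite Hz; lra| |].
    - intros N; unfold psum; rewrite (lsum_ext _ (fun _ => 0)); [rewrite lsum_const; lra|].
      intros; unfold dcoef; rewrite Hz; ring.
    - intros eps He; exists O; unfold psum; simpl; lra. }
  destruct (d_to0 HA (1 / 2) ltac:(lra)) as [dl [Hdl Dt]].
  set (x := Rmin (dl / 2) (1 / 2)).
  assert (Hx : 0 < x < dl)
    by (split; [apply Rmin_pos; lra|unfold x; eapply Rle_lt_trans; [apply Rmin_l|lra]]).
  assert (Hx1 : x <= 1 / 2) by apply Rmin_r.
  specialize (Dt x Hx). unfold dtail in Dt. rewrite Hd in Dt; lra.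
Qed.

(** [h(x) < x] on [(0,1]]: at [x = 1] this is [p(0) < 1]; for [x < 1] it
    follows from [h(x) <= x d(x)] and [d(x) < 1]. *)
Lemma h_below_identity x : 0 < x <= 1 -> h x < x.
Proof.
  intros Hx. destruct offspring_nontrivial as [m0 Hm0].
  destruct (Req_dec x 1) as [->|Hne].
  - assert (Hp0 : infinite_sum (fun k => p k * 0 ^ k) (p O)).
    { apply isum_of_sup.
      - intros [|k]; simpl; [rewrite Rmult_1_r; apply Hp|rewrite Rmult_0_l, Rmult_0_r; lra].
      - intros [|N]; [unfold psum; simpl; apply Hp|]. rewrite psum_shift.
        rewrite (psum_ext _ (fun _ => 0)); [unfold psum; rewrite lsum_const; simpl; lra|].
        intros; simpl; ring.
      - intros eps He; exists 1%nat. unfold psum; simpl; lra. }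
    assert (F0 : F 0 = p O) by (apply (isum_unique (fun k => p k * 0 ^ k)); [apply HF; lra|exact Hp0]).
    pose proof (HFh 1) as E. replace (1 - 1) with 0 in E by ring. rewrite F0 in E.
    assert (p O + p (S m0) <= 1).
    { apply Rle_trans with (psum p (S (S m0))); [|apply offspring_psum_le1; auto].
      rewrite psum_S. assert (p O <= psum p (S m0)).
      { apply Rle_trans with (psum p 1); [unfold psum; simpl; lra|apply psum_mono; auto; lia]. }
      lra. }
    lra.
  - assert (Hd1 : dtail x < 1).
    { unfold dtail. assert (0 < deriv_series p (1 - x)); [|lra].
      apply Rlt_le_trans with (psum (fun m => dcoef p m * (1 - x) ^ m) (S m0)).
      - rewrite psum_S.
        assert (0 <= psum (fun m => dcoef p m * (1 - x) ^ m) m0)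
          by (apply psum_nonneg; intros; apply deriv_series_terms_nonneg; auto; lra).
        assert (0 < dcoef p m0 * (1 - x) ^ m0); [|lra].
        apply Rmult_lt_0_compat; [unfold dcoef; apply Rmult_lt_0_compat; auto;
          apply lt_0_INR; lia|apply pow_lt; lra].
      - apply isum_le; [intros; apply deriv_series_terms_nonneg; auto; lra|].
        apply deriv_series_spec; auto; lra. }
    pose proof (ratio_le_d HA x Hx). rewrite (h_as_ratio h x) by lra.
    pose proof (ratio_pos HA x Hx). nra.
Qed.

(** Part (b): [nu(X^i_(n+1) > 0) = d(q_n)] with [q_n = 1 - Z_n], whence
    [(n+1) nu(X^i_(n+1) > 0) -> (a+1)/a]. *)
Lemma survival_tail i : Un_cv (fun n => A_survival p i (S n) * INR (S n)) ((a + 1) / a).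
Proof.
  set (Z := fun n => nnsum (extinct_weight p n)).
  set (q := fun n => 1 - Z n).
  assert (HZr : forall n, 0 <= Z n <= 1)
    by (intros n; apply (dominated_tree_sum p Hod _ (extinct_weight_bounds p Hod n))).
  assert (Hq0 : q 0%nat = 1) by (unfold q, Z; rewrite (extinct_sum_0 p Hod); ring).
  assert (Hqs : forall n, q (S n) = q n - h (q n)).
  { intros n. unfold q, Z. rewrite (extinct_sum_step p Hod F HF).
    fold (Z n). replace (F (Z n)) with (F (1 - (1 - Z n))) by (f_equal; ring). rewrite HFh. ring. }
  apply cv_ext with (u := fun n => dtail (q n) * INR (S n)) (N := O);
    [exact (d_along_q HA h_below_identity q Hq0 Hqs)|].
  intros n _. f_equal.
  pose proof (q_range HA h_below_identity q Hq0 Hqs n) as [Hq _].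
  rewrite (survival_identity p i n 1 (deriv_series p (Z n)) Hod).
  - unfold dtail, q. replace (1 - (1 - Z n)) with (Z n) by ring. ring.
  - rewrite gw_total_one. exact deriv_at_one.
  - apply deriv_series_spec; auto. unfold q in Hq. split; [apply HZr|lra].
Qed.

End OffspringTail.

Theorem mainTheorem5 (p : nat -> R) (beta : R) (l1 : R -> R) :
  offspring_distribution p ->
  2 < beta <= 3 ->
  slowly_varying_0 l1 ->
  (forall z : R, 0 <= z <= 1 ->
     infinite_sum (fun k => p k * z ^ k) (z + rpow (1 - z) (beta - 1) * l1 (1 - z))) ->
  forall i : nat, (1 <= i)%nat ->
    (exists l2 : R -> R, slowly_varying_0 l2 /\
       forall z : R, 0 < z < 1 ->
         A_size_gf p i z = 1 - rpow (1 - z) ((beta - 2) / (beta - 1)) * l2 (1 - z))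
    /\
    Un_cv (fun n => A_survival p i n / ((beta - 1) / (beta - 2) * / INR n)) 1.
Proof.
  intros Hod Hb Hsv HF i _.
  set (a := beta - 2).
  set (h := fun x => rpow x (beta - 1) * l1 x).
  assert (HFh : forall x, (fun z => z + rpow (1 - z) (beta - 1) * l1 (1 - z)) (1 - x) = 1 - x + h x)
    by (intros; unfold h; simpl; replace (1 - (1 - x)) with x by ring; reflexivity).
  assert (HA : tail_model a l1 h (dtail p)).
  { apply (tail_model_of_gf p Hod _ HF); auto; unfold a; [lra| |].
    - unfold h, rpow. destruct (Rle_dec 0 0); [ring|lra].
    - intros x Hx. unfold h, rpow. destruct (Rle_dec x 0); [lra|].
      replace (beta - 2 + 1) with (beta - 1) by ring. reflexivity. }
  replace (beta - 1) with (a + 1) by (unfold a; ring).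
  split; [exact (size_gf_tail p Hod _ HF a l1 h HFh HA i)|].
  apply cv_of_shift.
  pose proof (CV_mult _ _ _ _ (survival_tail p Hod _ HF a l1 h HFh HA i)
                (cv_const (a / (a + 1)))) as Hlim.
  replace ((a + 1) / a * (a / (a + 1))) with 1 in Hlim by (unfold a; field; lra).
  apply (cv_ext _ _ _ O Hlim). intros n _.
  assert (0 < INR (S n)) by (apply lt_0_INR; lia). field. unfold a; lra.
Qed.
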